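(* Let $x_0>0$ and $L>0$. There exist a unique $\lambda>0$ and a unique vertically symmetric admissible curve $\gamma=(x,y)$ on $[0,2L]$, parametrized by arc length, such that $\dot y(0)=\dot y(2L)=0$ and $$2+\frac{d^2(H^{-2})}{ds^2}=\lambda\quad\text{on }[0,2L],$$ if and only if $3x_0<L$. In that case $\lambda=\lambda(x_0,L)=\frac{2L}{L+x_0}$ and $\gamma=(x,y)$ is given, with $\sigma=\pi\sqrt{x_0/(L+x_0)}$, $k=L/\sin\sigma$ and $a(s)=\arcsin((s-L)/k)$, by $x(s)=-\frac k2\Big(\frac{\sigma}{\pi+\sigma}\sin\big(\tfrac{\pi+\sigma}{\sigma}a(s)\big)+\frac{\sigma}{\pi-\sigma}\sin\big(\tfrac{\pi-\sigma}{\sigma}a(s)\big)\Big)$, $y(s)=\frac k2\Big(\frac{\sigma}{\pi+\sigma}\cos\big(\tfrac{\pi+\sigma}{\sigma}a(s)\big)+\frac{\sigma}{\pi-\sigma}\cos\big(\tfrac{\pi-\sigma}{\sigma}a(s)\big)\Big)+\frac{\pi x_0}{\sigma\tan\sigma}$ for $s\in[0,2L]$.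
   Context: Notation: $(\xi,\eta)^\perp=(\eta,-\xi)$; for a regular curve $\gamma\in C^2([0,2L],\mathbb R^2)$, curvature $H=\langle\dot\gamma,\ddot\gamma^\perp\rangle/|\dot\gamma|^3$; strictly counterclockwise means $H>0$. A curve $\gamma=(x,y)$ is admissible if $\gamma\in C^\infty([0,2L],\mathbb R^2)$ is regular, strictly counterclockwise, injective, $\gamma(0)=(x_0,0)$, $\gamma(2L)=(-x_0,0)$, $y>0$ on $(0,2L)$. Vertically symmetric means the support is symmetric with respect to the axis $\{x=0\}$. Parametrized by arc length means $|\dot\gamma|\equiv1$. *)

From Stdlib Require Import Reals Lra.
From Coquelicot Require Import Coquelicot.
Open Scope R_scope.

(* f is C^infinity on an open neighbourhood (a-e, b+e) of [a,b].
   (Equivalent to C^infinity([a,b]) by Seeley/Borel extension.) *)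
Definition smooth_near (a b : R) (f : R -> R) : Prop :=
  exists e : R, 0 < e /\
    forall (n : nat) (t : R), a - e < t < b + e -> ex_derive_n f n t.

(* curvature H = <gamma', (gamma'')^perp> / |gamma'|^3, with (xi,eta)^perp = (eta,-xi) *)
Definition curvature (x y : R -> R) (s : R) : R :=
  (Derive x s * Derive (Derive y) s - Derive y s * Derive (Derive x) s)
  / (sqrt (Derive x s ^ 2 + Derive y s ^ 2)) ^ 3.

Definition admissible (x0 L : R) (x y : R -> R) : Prop :=
  smooth_near 0 (2 * L) x /\ smooth_near 0 (2 * L) y /\
  (forall s, 0 <= s <= 2 * L -> (Derive x s, Derive y s) <> (0, 0)) /\
  (forall s, 0 <= s <= 2 * L -> 0 < curvature x y s) /\
  (forall s t, 0 <= s <= 2 * L -> 0 <= t <= 2 * L ->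
     x s = x t -> y s = y t -> s = t) /\
  x 0 = x0 /\ y 0 = 0 /\ x (2 * L) = - x0 /\ y (2 * L) = 0 /\
  (forall s, 0 < s < 2 * L -> 0 < y s).

Definition vert_symmetric (L : R) (x y : R -> R) : Prop :=
  forall s, 0 <= s <= 2 * L ->
    exists t, 0 <= t <= 2 * L /\ x t = - x s /\ y t = y s.

Definition arclength_param (L : R) (x y : R -> R) : Prop :=
  forall s, 0 <= s <= 2 * L -> Derive x s ^ 2 + Derive y s ^ 2 = 1.

Definition is_solution (x0 L lam : R) (x y : R -> R) : Prop :=
  0 < lam /\ admissible x0 L x y /\ vert_symmetric L x y /\
  arclength_param L x y /\
  Derive y 0 = 0 /\ Derive y (2 * L) = 0 /\
  (forall s, 0 <= s <= 2 * L ->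
     2 + Derive_n (fun t => / (curvature x y t) ^ 2) 2 s = lam).

Definition sigma_ (x0 L : R) : R := PI * sqrt (x0 / (L + x0)).
Definition k_ (x0 L : R) : R := L / sin (sigma_ x0 L).
Definition a_ (x0 L s : R) : R := asin ((s - L) / k_ x0 L).

Definition sol_x (x0 L s : R) : R :=
  let sg := sigma_ x0 L in let k := k_ x0 L in let a := a_ x0 L s in
  - (k / 2) * (sg / (PI + sg) * sin ((PI + sg) / sg * a)
               + sg / (PI - sg) * sin ((PI - sg) / sg * a)).

Definition sol_y (x0 L s : R) : R :=
  let sg := sigma_ x0 L in let k := k_ x0 L in let a := a_ x0 L s in
  (k / 2) * (sg / (PI + sg) * cos ((PI + sg) / sg * a)
             + sg / (PI - sg) * cos ((PI - sg) / sg * a))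
  + PI * x0 / (sg * tan sg).

From Stdlib Require Import Reals Lra Lia ClassicalEpsilon Classical.
From Coquelicot Require Import Coquelicot.
Open Scope R_scope.

(* Vertical symmetry says that x |-> -x maps the support onto itself; being an isometry of
   an injective unit-speed curve it reverses the parameter, so x (2L - s) = - x s and
   y (2L - s) = y s.  For a unit-speed curve with curvature kappa, the equation says
   (kappa^-2)'' = lam - 2, so kappa^-2 = q0 + q2 (s - L)^2, the linear term vanishing by
   symmetry.  The tangent angle th, th' = kappa, th 0 = 0 (y > 0 forces the initial tangent
   (1, 0)), can then be integrated in closed form: linear if q2 = 0, an arcsinh if q2 > 0, and
   w arcsin ((s - L) / k) + const if q2 < 0, with w^2 = -1/q2, k^2 = -q0/q2.  The boundary
   conditions (final tangent (1, 0), x (2L) - x 0 = -2 x0 < 0, y > 0) exclude q2 >= 0 and,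
   for q2 < 0, force w alpha = PI with alpha = arcsin (L / k) < PI / 2 and x0 (w^2 - 1) = L;
   this determines lam, sigma = alpha and the curve, and w > 2 is exactly 3 x0 < L. *)

Definition Cn_on (U : R -> Prop) (n : nat) (f : R -> R) : Prop :=
  forall k t, (k <= n)%nat -> U t -> ex_derive_n f k t.

Lemma is_derive_lim (f : R -> R) t l : derivable_pt_lim f t l -> is_derive f t l.
Proof. apply is_derive_Reals. Qed.

Lemma is_derive_Rconst (c t : R) : is_derive (fun _ => c) t 0.
Proof. apply is_derive_lim, derivable_pt_lim_const. Qed.

Lemma is_derive_Rplus (f g : R -> R) (t a b : R) : is_derive f t a -> is_derive g t b ->
  is_derive (fun u => f u + g u) t (a + b).
Proof. intros; apply (is_derive_plus f g); auto. Qed.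

Lemma is_derive_Rminus (f g : R -> R) (t a b : R) : is_derive f t a -> is_derive g t b ->
  is_derive (fun u => f u - g u) t (a - b).
Proof. intros; apply (is_derive_minus f g); auto. Qed.

Lemma is_derive_Rmult (f g : R -> R) (t a b : R) : is_derive f t a -> is_derive g t b ->
  is_derive (fun u => f u * g u) t (a * g t + f t * b).
Proof. intros; apply (is_derive_mult f g); auto. intros; apply Rmult_comm. Qed.

Lemma is_derive_Rcomp (h u : R -> R) (t a b : R) : is_derive u t a -> is_derive h (u t) b ->
  is_derive (fun v => h (u v)) t (b * a).
Proof. intros; rewrite Rmult_comm; apply (is_derive_comp h u); auto. Qed.

Lemma is_derive_eq (f g : R -> R) (t a b : R) :
  (forall u, f u = g u) -> a = b -> is_derive f t a -> is_derive g t b.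
Proof. intros E <- H; eapply is_derive_ext; eauto. Qed.

Lemma is_derive_continuity_pt (f : R -> R) t l : is_derive f t l -> continuity_pt f t.
Proof.
  intros H; apply derivable_continuous_pt; exists l; apply is_derive_Reals, H.
Qed.

Lemma Derive_n_Derive f n t : Derive_n (Derive f) n t = Derive_n f (S n) t.
Proof.
  revert t; induction n as [|n IH]; intros t; [reflexivity|].
  simpl; apply Derive_ext; intros; apply IH.
Qed.

Section SmoothOn.
Variable U : R -> Prop.
Hypothesis U_open : open U.

Lemma Derive_n_S_of_is_derive f g :
  (forall t, U t -> is_derive f t (g t)) ->
  forall n t, U t -> Derive_n f (S n) t = Derive_n g n t.
Proof.
  intros Hd n; induction n as [|n IH]; intros t Ht.
  - apply is_derive_unique, Hd, Ht.
  - simpl; apply Derive_ext_loc.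
    apply (filter_imp U); [intros; apply IH; auto | apply U_open, Ht].
Qed.

Lemma Cn_on_of_is_derive n f g : (forall t, U t -> is_derive f t (g t)) ->
  Cn_on U n g -> Cn_on U (S n) f.
Proof.
  intros Hd Hg [|[|i]] t Hk Ht; [exact I | eexists; apply Hd, Ht |].
  apply ex_derive_ext_loc with (f := Derive_n g i).
  - apply (filter_imp U); [|apply U_open, Ht].
    intros u Hu; symmetry; apply (Derive_n_S_of_is_derive f g Hd i u Hu).
  - apply (Hg (S i) t); [lia | auto].
Qed.

Lemma Cn_on_Derive n f : Cn_on U (S n) f -> Cn_on U n (Derive f).
Proof.
  intros H [|j] t Hk Ht; [exact I|].
  apply ex_derive_ext with (f := Derive_n f (S j)).
  - intros; symmetry; apply Derive_n_Derive.
  - apply (H (S (S j)) t); [lia | auto].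
Qed.

Lemma Cn_on_is_derive n f t : Cn_on U (S n) f -> U t -> is_derive f t (Derive f t).
Proof. intros H Ht; apply Derive_correct, (H 1%nat t); [lia | auto]. Qed.

Lemma Cn_on_le m n f : (m <= n)%nat -> Cn_on U n f -> Cn_on U m f.
Proof. intros Hmn H k t Hk Ht; apply H; auto; lia. Qed.

Lemma Cn_on_0 f : Cn_on U 0 f.
Proof. intros [|k] t Hk Ht; [exact I | lia]. Qed.

Lemma Cn_on_ext n f g : (forall t, f t = g t) -> Cn_on U n f -> Cn_on U n g.
Proof. intros E H k t Hk Ht; apply ex_derive_n_ext with f; auto. Qed.

Lemma Cn_on_const n c : Cn_on U n (fun _ => c).
Proof.
  revert c; induction n as [|n IH]; intros c; [apply Cn_on_0|].
  apply Cn_on_of_is_derive with (g := fun _ => 0); auto.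
  intros; apply is_derive_Rconst.
Qed.

Lemma Cn_on_plus n f g : Cn_on U n f -> Cn_on U n g -> Cn_on U n (fun t => f t + g t).
Proof.
  revert f g; induction n as [|n IH]; intros f g Hf Hg; [apply Cn_on_0|].
  apply Cn_on_of_is_derive with (g := fun t => Derive f t + Derive g t).
  - intros t Ht; apply is_derive_Rplus; eapply Cn_on_is_derive; eauto.
  - apply IH; apply Cn_on_Derive; auto.
Qed.

Lemma Cn_on_mult n f g : Cn_on U n f -> Cn_on U n g -> Cn_on U n (fun t => f t * g t).
Proof.
  revert f g; induction n as [|n IH]; intros f g Hf Hg; [apply Cn_on_0|].
  apply Cn_on_of_is_derive with (g := fun t => Derive f t * g t + f t * Derive g t).
  - intros t Ht; apply is_derive_Rmult; eapply Cn_on_is_derive; eauto.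
  - assert (Hf' : Cn_on U n f) by (apply (Cn_on_le n (S n)); [lia | exact Hf]).
    assert (Hg' : Cn_on U n g) by (apply (Cn_on_le n (S n)); [lia | exact Hg]).
    apply Cn_on_plus; apply IH; auto; apply Cn_on_Derive; assumption.
Qed.

Lemma Cn_on_id n : Cn_on U n (fun t => t).
Proof.
  destruct n as [|n]; [apply Cn_on_0|].
  apply Cn_on_of_is_derive with (g := fun _ => 1); [|apply Cn_on_const].
  intros; auto_derive; auto.
Qed.

Lemma Cn_on_scal n c f : Cn_on U n f -> Cn_on U n (fun t => c * f t).
Proof. intros; apply Cn_on_mult; auto; apply Cn_on_const. Qed.

Lemma Cn_on_minus n f g : Cn_on U n f -> Cn_on U n g -> Cn_on U n (fun t => f t - g t).
Proof.
  intros Hf Hg; apply Cn_on_ext with (fun t => f t + (-1) * g t); [intros; ring|].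
  apply Cn_on_plus, Cn_on_scal; auto.
Qed.

End SmoothOn.

Lemma Cn_on_subset (U V : R -> Prop) n f : (forall t, U t -> V t) -> Cn_on V n f -> Cn_on U n f.
Proof. intros H Hf k t Hk Ht; apply Hf; auto. Qed.

Lemma Cn_on_comp U V n h u : open U -> open V -> (forall t, U t -> V (u t)) ->
  Cn_on V n h -> Cn_on U n u -> Cn_on U n (fun t => h (u t)).
Proof.
  intros HU HV. revert h u; induction n as [|n IH]; intros h u Huv Hh Hu; [apply Cn_on_0|].
  apply Cn_on_of_is_derive with (g := fun t => Derive h (u t) * Derive u t); auto.
  - intros t Ht; apply is_derive_Rcomp; eapply Cn_on_is_derive; eauto.
  - apply Cn_on_mult; [exact HU | apply IH | apply Cn_on_Derive]; auto.
    + apply Cn_on_Derive; exact Hh.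
    + apply (Cn_on_le U n (S n)); [lia | exact Hu].
Qed.

Lemma Cn_on_sin_cos n : Cn_on (fun _ => True) n sin /\ Cn_on (fun _ => True) n cos.
Proof.
  induction n as [|n [Hs Hc]]; [split; apply Cn_on_0|]; split.
  - apply Cn_on_of_is_derive with (g := cos); [apply open_true | | exact Hc].
    intros; apply is_derive_lim, derivable_pt_lim_sin.
  - apply Cn_on_of_is_derive with (g := fun t => -1 * sin t); [apply open_true | |].
    + intros; eapply is_derive_eq;
        [intros; reflexivity | | apply is_derive_lim, derivable_pt_lim_cos]; ring.
    + apply Cn_on_scal; [apply open_true | exact Hs].
Qed.

Definition positives (t : R) : Prop := 0 < t.
Definition unit_ball (t : R) : Prop := -1 < t < 1.

Lemma open_positives : open positives.
Proof. apply open_gt. Qed.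

Lemma open_unit_ball : open unit_ball.
Proof. apply open_and; [apply open_gt | apply open_lt]. Qed.

Lemma Cn_on_Rinv n : Cn_on positives n Rinv.
Proof.
  induction n as [|n IH]; [apply Cn_on_0|].
  apply Cn_on_of_is_derive with (g := fun t => -1 * (/ t * / t)); [apply open_positives | |].
  - intros t Ht; unfold positives in Ht; auto_derive; [lra | field; lra].
  - apply Cn_on_scal, Cn_on_mult; auto; apply open_positives.
Qed.

Lemma Cn_on_sqrt n : Cn_on positives n sqrt.
Proof.
  induction n as [|n IH]; [apply Cn_on_0|].
  apply Cn_on_of_is_derive with (g := fun t => / 2 * / sqrt t); [apply open_positives | |].
  - intros t Ht; unfold positives in Ht; auto_derive; [lra|].
    field; apply Rgt_not_eq, sqrt_lt_R0; lra.
  - apply Cn_on_scal; [apply open_positives|].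
    apply (Cn_on_comp positives positives); auto using open_positives, Cn_on_Rinv.
    intros t Ht; apply sqrt_lt_R0, Ht.
Qed.

Lemma sqrt_1_minus_sqr_pos z : -1 < z < 1 -> 0 < sqrt (1 - z * z).
Proof. intros; apply sqrt_lt_R0; nra. Qed.

Lemma is_derive_asin t : -1 < t < 1 -> is_derive asin t (/ sqrt (1 - t * t)).
Proof.
  intros H; apply is_derive_lim, derive_pt_eq_1 with (derivable_pt_asin t H).
  rewrite derive_pt_asin; unfold Rsqr; field; apply Rgt_not_eq, sqrt_1_minus_sqr_pos, H.
Qed.

Lemma Cn_on_asin n : Cn_on unit_ball n asin.
Proof.
  destruct n as [|n]; [apply Cn_on_0|].
  apply Cn_on_of_is_derive with (g := fun t => / sqrt (1 - t * t));
    [apply open_unit_ball | apply is_derive_asin |].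
  apply (Cn_on_comp unit_ball positives); auto using open_unit_ball, open_positives, Cn_on_Rinv.
  - intros t Ht; apply sqrt_1_minus_sqr_pos, Ht.
  - apply (Cn_on_comp unit_ball positives); auto using open_unit_ball, open_positives, Cn_on_sqrt.
    + intros t Ht; unfold positives, unit_ball in *; nra.
    + apply Cn_on_minus; auto using open_unit_ball, Cn_on_const.
      apply Cn_on_mult; auto using open_unit_ball, Cn_on_id.
Qed.

Lemma sin2_cos2_mult a : sin a * sin a + cos a * cos a = 1.
Proof. pose proof (sin2_cos2 a) as H; unfold Rsqr in H; lra. Qed.

Lemma increment_eq_of_derive_eq (f g df : R -> R) a b :
  a <= b ->
  (forall t, a < t < b -> is_derive f t (df t)) ->
  (forall t, a < t < b -> is_derive g t (df t)) ->
  (forall t, a <= t <= b -> continuity_pt f t) ->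
  (forall t, a <= t <= b -> continuity_pt g t) ->
  forall t, a <= t <= b -> f t - f a = g t - g a.
Proof.
  intros Hab Hf Hg Cf Cg t Ht.
  destruct (MVT_gen (fun u => f u - g u) a t (fun _ => 0)) as [c [_ E]];
    rewrite ?Rmin_left, ?Rmax_right by lra.
  - intros u Hu; rewrite <- (Rminus_diag_eq (df u) (df u)) by reflexivity.
    apply is_derive_Rminus; [apply Hf | apply Hg]; lra.
  - intros u Hu; apply continuity_pt_minus; [apply Cf | apply Cg]; lra.
  - simpl in E; lra.
Qed.

Lemma const_of_derive_0 (f : R -> R) a b :
  a <= b -> (forall t, a < t < b -> is_derive f t 0) ->
  (forall t, a <= t <= b -> continuity_pt f t) ->
  forall t, a <= t <= b -> f t = f a.
Proof.
  intros Hab Hf Cf t Ht.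
  enough (f t - f a = 0 - 0) by lra.
  apply (increment_eq_of_derive_eq f (fun _ => 0) (fun _ => 0) a b); auto.
  - intros; apply is_derive_Rconst.
  - intros; apply continuity_pt_const; intros u v; reflexivity.
Qed.

Lemma increment_eq_of_derive_eq_open (f g df : R -> R) a b :
  (forall t, a < t < b -> is_derive f t (df t)) ->
  (forall t, a < t < b -> is_derive g t (df t)) ->
  forall t u, a < t < b -> a < u < b -> f t - f u = g t - g u.
Proof.
  intros Hf Hg.
  assert (K : forall p q, a < p < b -> a < q < b -> p <= q -> f q - f p = g q - g p).
  { intros p q Hp Hq Hpq.
    apply (increment_eq_of_derive_eq f g df p q Hpq); try lra; intros v Hv.
    - apply Hf; lra.
    - apply Hg; lra.
    - apply (is_derive_continuity_pt _ _ _ (Hf v ltac:(lra))).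
    - apply (is_derive_continuity_pt _ _ _ (Hg v ltac:(lra))). }
  intros t u Ht Hu; destruct (Rle_dec u t).
  - apply K; auto.
  - enough (f u - f t = g u - g t) by lra. apply K; auto; lra.
Qed.

Lemma MVT_is_derive (f df : R -> R) a b : a < b ->
  (forall t, a < t < b -> is_derive f t (df t)) ->
  (forall t, a <= t <= b -> continuity_pt f t) ->
  exists c, a < c < b /\ f b - f a = df c * (b - a).
Proof.
  intros Hab Hf Cf.
  assert (pr1 : forall c, a < c < b -> derivable_pt f c).
  { intros c Hc; exists (df c); apply is_derive_Reals, Hf, Hc. }
  assert (pr2 : forall c, a < c < b -> derivable_pt id c) by (intros; apply derivable_pt_id).
  destruct (MVT f id a b pr1 pr2 Hab Cf) as [c [Hc E]].
  { intros; apply derivable_continuous_pt, derivable_pt_id. }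
  exists c; split; auto.
  rewrite (derive_pt_eq_0 f c (df c) (pr1 c Hc)) in E by apply is_derive_Reals, Hf, Hc.
  rewrite (derive_pt_eq_0 id c 1 (pr2 c Hc)) in E by apply derivable_pt_lim_id.
  unfold id in E; lra.
Qed.

Lemma strict_incr_of_derive_pos (f df : R -> R) a b :
  (forall t, a < t < b -> is_derive f t (df t)) ->
  (forall t, a < t < b -> 0 < df t) ->
  (forall t, a <= t <= b -> continuity_pt f t) ->
  forall t u, a <= t -> t < u -> u <= b -> f t < f u.
Proof.
  intros Hf Hp Cf t u Ht Htu Hu.
  destruct (MVT_is_derive f df t u Htu) as [c [Hc E]].
  - intros v Hv; apply Hf; lra.
  - intros v Hv; apply Cf; lra.
  - assert (0 < df c) by (apply Hp; lra). nra.
Qed.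

Lemma continuity_pt_eq_right (g : R -> R) a b c : a < b -> continuity_pt g a ->
  (forall s, a < s < b -> g s = c) -> g a = c.
Proof.
  intros Hab Cg H. rewrite continuity_pt_locally in Cg.
  destruct (Req_dec (g a) c) as [|Hne]; auto. exfalso.
  assert (He : 0 < Rabs (g a - c)) by (apply Rabs_pos_lt; lra).
  destruct (Cg (mkposreal _ He)) as [d Hd]; simpl in Hd.
  pose proof (cond_pos d).
  set (s := a + Rmin (d / 2) ((b - a) / 2)).
  assert (Hs1 : a < s < b) by (unfold s, Rmin; destruct Rle_dec; lra).
  assert (Hs2 : Rabs (s - a) < d)
    by (unfold s; rewrite Rabs_right; unfold Rmin; destruct Rle_dec; lra).
  specialize (Hd s Hs2). rewrite H, <- Rabs_Ropp in Hd by exact Hs1.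
  replace (- (c - g a)) with (g a - c) in Hd by ring. lra.
Qed.

(** * Explicit primitives *)

Definition arc (k c s : R) : R := asin ((s - c) / k).

Definition prim_cos_arc (k w b c s : R) : R :=
  k / 2 * (sin ((w + 1) * arc k c s + b) / (w + 1)
           + sin ((w - 1) * arc k c s + b) / (w - 1)).
Definition prim_sin_arc (k w b c s : R) : R :=
  - (k / 2) * (cos ((w + 1) * arc k c s + b) / (w + 1)
               + cos ((w - 1) * arc k c s + b) / (w - 1)).

Lemma is_derive_arc k c s : 0 < k -> -1 < (s - c) / k < 1 ->
  is_derive (arc k c) s (/ k * / sqrt (1 - (s - c) / k * ((s - c) / k))).
Proof.
  intros Hk H; unfold arc; auto_derive;
    replace ((s + - c) * / k) with ((s - c) / k) by (unfold Rdiv; ring).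
  - eexists; apply is_derive_asin, H.
  - rewrite (Derive_ext (fun x => asin x) asin) by reflexivity.
    rewrite (is_derive_unique asin _ _ (is_derive_asin _ H)); ring.
Qed.

Lemma is_derive_angle_arc k w b c s : 0 < k -> -1 < (s - c) / k < 1 ->
  is_derive (fun s => w * arc k c s + b) s
    (w * (/ k * / sqrt (1 - (s - c) / k * ((s - c) / k)))).
Proof.
  intros Hk H; apply is_derive_Reals.
  pose proof (proj1 (is_derive_Reals _ _ _) (is_derive_arc k c s Hk H)) as Ha.
  rewrite <- Rplus_0_r; apply (derivable_pt_lim_plus (fun s => w * arc k c s) (fun _ => b)).
  - apply (derivable_pt_lim_scal (arc k c)), Ha.
  - apply derivable_pt_lim_const.
Qed.

Lemma is_derive_prim_cos_arc k w b c s : 0 < k -> 1 < w -> -1 < (s - c) / k < 1 ->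
  is_derive (prim_cos_arc k w b c) s (cos (w * arc k c s + b)).
Proof.
  intros Hk Hw H; unfold prim_cos_arc, arc.
  pose proof (sqrt_1_minus_sqr_pos _ H) as Hq.
  assert (Hca : cos (asin ((s - c) / k)) = sqrt (1 - (s - c) / k * ((s - c) / k)))
    by (rewrite cos_asin; [reflexivity | lra]).
  auto_derive; replace ((s + - c) * / k) with ((s - c) / k) by (unfold Rdiv; ring).
  - repeat split; eexists; apply is_derive_asin, H.
  - rewrite (Derive_ext (fun x => asin x) asin) by reflexivity.
    rewrite (is_derive_unique asin _ _ (is_derive_asin _ H)).
    set (A := asin ((s - c) / k)) in *.
    replace ((w + 1) * A + b) with ((w * A + b) + A) by ring.
    replace ((w - 1) * A + b) with ((w * A + b) - A) by ring.
    rewrite cos_plus, cos_minus, Hca; field; lra.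
Qed.

Lemma is_derive_prim_sin_arc k w b c s : 0 < k -> 1 < w -> -1 < (s - c) / k < 1 ->
  is_derive (prim_sin_arc k w b c) s (sin (w * arc k c s + b)).
Proof.
  intros Hk Hw H; unfold prim_sin_arc, arc.
  pose proof (sqrt_1_minus_sqr_pos _ H) as Hq.
  assert (Hca : cos (asin ((s - c) / k)) = sqrt (1 - (s - c) / k * ((s - c) / k)))
    by (rewrite cos_asin; [reflexivity | lra]).
  auto_derive; replace ((s + - c) * / k) with ((s - c) / k) by (unfold Rdiv; ring).
  - repeat split; eexists; apply is_derive_asin, H.
  - rewrite (Derive_ext (fun x => asin x) asin) by reflexivity.
    rewrite (is_derive_unique asin _ _ (is_derive_asin _ H)).
    set (A := asin ((s - c) / k)) in *.
    replace ((w + 1) * A + b) with ((w * A + b) + A) by ring.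
    replace ((w - 1) * A + b) with ((w * A + b) - A) by ring.
    rewrite sin_plus, sin_minus, Hca; field; lra.
Qed.

Definition prim_cos_arcsinh (k w b c s : R) : R :=
  let z := (s - c) / k in
  k * (z * cos (w * arcsinh z + b) + w * sqrt (z ^ 2 + 1) * sin (w * arcsinh z + b))
    / (1 + w ^ 2).

Lemma sqrt_sqr_plus_1_pos z : 0 < sqrt (z ^ 2 + 1).
Proof. apply sqrt_lt_R0; nra. Qed.

Lemma is_derive_arcsinh z : is_derive arcsinh z (/ sqrt (z ^ 2 + 1)).
Proof. apply is_derive_lim, derivable_pt_lim_arcsinh. Qed.

Lemma is_derive_angle_arcsinh k w b c s : 0 < k ->
  is_derive (fun s => w * arcsinh ((s - c) / k) + b) s
    (w * (/ k * / sqrt (((s - c) / k) ^ 2 + 1))).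
Proof.
  intros Hk; pose proof (sqrt_sqr_plus_1_pos ((s - c) / k)) as Hq.
  auto_derive; replace ((s + - c) * / k) with ((s - c) / k) by (unfold Rdiv; ring).
  - eexists; apply is_derive_arcsinh.
  - rewrite (Derive_ext (fun x => arcsinh x) arcsinh) by reflexivity.
    rewrite (is_derive_unique arcsinh _ _ (is_derive_arcsinh _)); field; lra.
Qed.

Lemma is_derive_prim_cos_arcsinh k w b c s : 0 < k ->
  is_derive (prim_cos_arcsinh k w b c) s (cos (w * arcsinh ((s - c) / k) + b)).
Proof.
  intros Hk; unfold prim_cos_arcsinh.
  pose proof (sqrt_sqr_plus_1_pos ((s - c) / k)) as Hq.
  auto_derive; replace ((s + - c) * / k) with ((s - c) / k) by (unfold Rdiv; ring).
  - repeat split; try (eexists; apply is_derive_arcsinh).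
    pose proof (Rle_0_sqr ((s - c) / k)); unfold Rsqr in *; lra.
  - rewrite (Derive_ext (fun x => arcsinh x) arcsinh) by reflexivity.
    rewrite (is_derive_unique arcsinh _ _ (is_derive_arcsinh _)).
    set (z := (s - c) / k) in *.
    replace (z * (z * 1) + 1) with (z ^ 2 + 1) by ring.
    field; split; [nra | split; lra].
Qed.

Lemma sol_eq_prim x0 L s : 0 < sigma_ x0 L < PI ->
  sol_x x0 L s = prim_cos_arc (k_ x0 L) (PI / sigma_ x0 L) PI L s /\
  sol_y x0 L s = prim_sin_arc (k_ x0 L) (PI / sigma_ x0 L) PI L s
                 + PI * x0 / (sigma_ x0 L * tan (sigma_ x0 L)).
Proof.
  intros Hs; unfold sol_x, sol_y, prim_cos_arc, prim_sin_arc, a_, arc.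
  set (sg := sigma_ x0 L) in *; set (a := asin ((s - L) / k_ x0 L)).
  pose proof PI_RGT_0.
  replace ((PI / sg + 1) * a + PI) with ((PI + sg) / sg * a + PI) by (field; lra).
  replace ((PI / sg - 1) * a + PI) with ((PI - sg) / sg * a + PI) by (field; lra).
  rewrite !neg_sin, !neg_cos.
  replace (PI / sg + 1) with ((PI + sg) / sg) by (field; lra).
  replace (PI / sg - 1) with ((PI - sg) / sg) by (field; lra).
  set (T := PI * x0 / (sg * tan sg)).
  split; field; repeat split; lra.
Qed.

(** * The reflection reverses the parameter *)

Lemma chord_ratio_near_1 (x y : R -> R) s a b :
  derivable_pt_lim x s a -> derivable_pt_lim y s b -> a * a + b * b = 1 ->
  forall eta, 0 < eta -> exists d, 0 < d /\ forall h, h <> 0 -> Rabs h < d ->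
    Rabs (((x (s + h) - x s) ^ 2 + (y (s + h) - y s) ^ 2) / h ^ 2 - 1) < eta.
Proof.
  intros Hx Hy Hab eta Heta.
  set (e := Rmin 1 (eta / 6)).
  assert (He : 0 < e) by (unfold e, Rmin; destruct Rle_dec; lra).
  assert (He1 : e <= 1) by apply Rmin_l.
  assert (He2 : e <= eta / 6) by apply Rmin_r.
  destruct (Hx e He) as [d1 H1]; destruct (Hy e He) as [d2 H2].
  pose proof (cond_pos d1); pose proof (cond_pos d2).
  exists (Rmin d1 d2); split; [unfold Rmin; destruct Rle_dec; lra|].
  intros h Hh Hhd.
  specialize (H1 h Hh (Rlt_le_trans _ _ _ Hhd (Rmin_l _ _))).
  specialize (H2 h Hh (Rlt_le_trans _ _ _ Hhd (Rmin_r _ _))).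
  set (p := (x (s + h) - x s) / h) in *; set (q := (y (s + h) - y s) / h) in *.
  replace (((x (s + h) - x s) ^ 2 + (y (s + h) - y s) ^ 2) / h ^ 2) with (p * p + q * q)
    by (unfold p, q; field; auto).
  apply Rabs_def2 in H1; apply Rabs_def2 in H2; destruct H1, H2.
  assert (-1 <= a <= 1) by nra; assert (-1 <= b <= 1) by nra.
  apply Rabs_def1; nra.
Qed.

Lemma neg_ratio_near_minus_1 Q1 Q2 rho eta eps :
  Rabs (Q1 - 1) < eta -> Rabs (Q2 - 1) < eta -> eta <= 1 / 2 -> eta <= eps / 4 ->
  Q1 = Q2 * (rho * rho) -> rho < 0 -> Rabs (rho - -1) < eps.
Proof.
  intros H1 H2 He1 He2 E Hr.
  apply Rabs_def2 in H1; apply Rabs_def2 in H2; destruct H1, H2.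
  assert (Hr2 : Rabs (rho * rho - 1) < eps).
  { replace (rho * rho - 1) with ((Q1 - Q2) / Q2) by (rewrite E; field; lra).
    unfold Rdiv; rewrite Rabs_mult, Rabs_inv, (Rabs_right Q2) by lra.
    apply Rmult_lt_reg_r with Q2; [lra|].
    rewrite Rmult_assoc, Rinv_l, Rmult_1_r by lra.
    apply Rabs_def1; nra. }
  apply Rabs_def2 in Hr2; destruct Hr2; apply Rabs_def1; nra.
Qed.

Definition clamp (l t : R) : R := Rmax 0 (Rmin l t).

Lemma clamp_in l t : 0 <= l -> 0 <= clamp l t <= l.
Proof. intros; unfold clamp, Rmax, Rmin; repeat destruct Rle_dec; lra. Qed.

Lemma clamp_id l t : 0 <= t <= l -> clamp l t = t.
Proof. intros; unfold clamp, Rmax, Rmin; repeat destruct Rle_dec; lra. Qed.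

Lemma clamp_lipschitz l t u : 0 <= l -> Rabs (clamp l t - clamp l u) <= Rabs (t - u).
Proof.
  intros; unfold clamp, Rmax, Rmin; repeat destruct Rle_dec;
  repeat match goal with |- context [Rabs ?z] => destruct (Rcase_abs z);
    [rewrite (Rabs_left z) by assumption | rewrite (Rabs_right z) by assumption] end; lra.
Qed.

Section Mirror.
Variables (x y dx dy : R -> R) (l : R).
Hypothesis l_pos : 0 < l.
Hypothesis x_cont : forall t, 0 <= t <= l -> continuity_pt x t.
Hypothesis y_cont : forall t, 0 <= t <= l -> continuity_pt y t.
Hypothesis x_der : forall t, 0 < t < l -> is_derive x t (dx t).
Hypothesis y_der : forall t, 0 < t < l -> is_derive y t (dy t).
Hypothesis unit_speed : forall t, 0 < t < l -> dx t * dx t + dy t * dy t = 1.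
Hypothesis curve_inj : forall s t, 0 <= s <= l -> 0 <= t <= l ->
  x s = x t -> y s = y t -> s = t.
Hypothesis x_end : x l = - x 0.
Hypothesis y_end : y l = y 0.

Definition sqdist (v t : R) : R := (x t - x v) ^ 2 + (y t - y v) ^ 2.

Lemma sqdist_continuity_pt v t : 0 <= t <= l -> continuity_pt (sqdist v) t.
Proof.
  intros Ht; unfold sqdist.
  apply continuity_pt_plus; apply (continuity_pt_comp _ (fun u => u ^ 2));
    try apply derivable_continuous_pt, derivable_pt_pow;
    apply continuity_pt_minus; auto; apply continuity_pt_const; intros ? ?; reflexivity.
Qed.

Lemma sqdist_pos v t : 0 <= v <= l -> 0 <= t <= l -> t <> v -> 0 < sqdist v t.
Proof.
  intros Hv Ht Hne; unfold sqdist.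
  destruct (Rle_lt_dec ((x t - x v) ^ 2 + (y t - y v) ^ 2) 0) as [H|H]; auto.
  pose proof (pow2_ge_0 (x t - x v)); pose proof (pow2_ge_0 (y t - y v)).
  exfalso; apply Hne, curve_inj; auto.
  - enough (x t - x v = 0) by lra. apply Rsqr_0_uniq; unfold Rsqr; nra.
  - enough (y t - y v = 0) by lra. apply Rsqr_0_uniq; unfold Rsqr; nra.
Qed.

Lemma sqdist_bounded_below v a b : 0 <= v <= l -> 0 <= a -> b <= l ->
  (forall t, a <= t <= b -> t <> v) ->
  exists m, 0 < m /\ forall t, a <= t <= b -> m <= sqdist v t.
Proof.
  intros Hv Ha Hb Hne; destruct (Rle_lt_dec a b) as [Hab|Hab]; [|exists 1; split; intros; lra].
  destruct (continuity_ab_min (sqdist v) a b Hab) as [c [Hc1 Hc2]].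
  { intros c Hc; apply sqdist_continuity_pt; lra. }
  exists (sqdist v c); split; auto.
  apply sqdist_pos; [exact Hv | lra | apply Hne, Hc2].
Qed.

Variable m : R -> R.
Hypothesis m_spec : forall s, 0 <= s <= l ->
  0 <= m s <= l /\ x (m s) = - x s /\ y (m s) = y s.

Lemma mirror_inj s t : 0 <= s <= l -> 0 <= t <= l -> m s = m t -> s = t.
Proof.
  intros Hs Ht E; destruct (m_spec s Hs) as [_ [X1 Y1]]; destruct (m_spec t Ht) as [_ [X2 Y2]].
  rewrite E in X1, Y1; apply curve_inj; auto; lra.
Qed.

Lemma mirror_0 : m 0 = l.
Proof. destruct (m_spec 0 ltac:(lra)) as [B [X Y]]; apply curve_inj; auto; lra. Qed.

Lemma mirror_l : m l = 0.
Proof. destruct (m_spec l ltac:(lra)) as [B [X Y]]; apply curve_inj; auto; lra. Qed.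

Lemma mirror_interior s : 0 < s < l -> 0 < m s < l.
Proof.
  intros Hs; destruct (m_spec s ltac:(lra)) as [[H0 Hl] _]; split.
  - destruct H0 as [|E]; auto. rewrite <- mirror_l in E; apply mirror_inj in E; lra.
  - destruct Hl as [|E]; auto. rewrite <- mirror_0 in E; apply mirror_inj in E; lra.
Qed.

Lemma sqdist_mirror s t : 0 <= s <= l -> 0 <= t <= l -> sqdist (m s) (m t) = sqdist s t.
Proof.
  intros Hs Ht; destruct (m_spec s Hs) as [_ [X1 Y1]]; destruct (m_spec t Ht) as [_ [X2 Y2]].
  unfold sqdist; rewrite X1, Y1, X2, Y2; ring.
Qed.

(* Injectivity turns continuity of [x, y] into continuity of the reparametrization [m]. *)
Lemma mirror_continuous s : 0 <= s <= l -> forall eps, 0 < eps -> exists d, 0 < d /\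
  forall s', 0 <= s' <= l -> Rabs (s' - s) < d -> Rabs (m s' - m s) < eps.
Proof.
  intros Hs eps Heps; destruct (m_spec s Hs) as [Hv _]; set (v := m s) in *.
  destruct (sqdist_bounded_below v 0 (v - eps)) as [m1 [Hm1 H1]]; try lra; [intros; lra|].
  destruct (sqdist_bounded_below v (v + eps) l) as [m2 [Hm2 H2]]; try lra; [intros; lra|].
  assert (Hfar : forall t, 0 <= t <= l -> eps <= Rabs (t - v) -> Rmin m1 m2 <= sqdist v t).
  { intros t Ht Ha; destruct (Rle_lt_dec t v).
    - rewrite Rabs_left1 in Ha by lra. eapply Rle_trans; [apply Rmin_l | apply H1; lra].
    - rewrite Rabs_right in Ha by lra. eapply Rle_trans; [apply Rmin_r | apply H2; lra]. }
  assert (Hm : 0 < Rmin m1 m2) by (unfold Rmin; destruct Rle_dec; lra).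
  set (eta := Rmin 1 (Rmin m1 m2 / 4)).
  assert (He : 0 < eta) by (unfold eta, Rmin at 1; destruct Rle_dec; lra).
  assert (He1 : eta <= 1) by apply Rmin_l; assert (He2 : eta <= Rmin m1 m2 / 4) by apply Rmin_r.
  pose proof (x_cont s Hs) as Cx; pose proof (y_cont s Hs) as Cy.
  rewrite continuity_pt_locally in Cx, Cy.
  destruct (Cx (mkposreal _ He)) as [d1 Hd1]; destruct (Cy (mkposreal _ He)) as [d2 Hd2].
  simpl in Hd1, Hd2; pose proof (cond_pos d1); pose proof (cond_pos d2).
  exists (Rmin d1 d2); split; [unfold Rmin; destruct Rle_dec; lra|].
  intros s' Hs' Hd.
  specialize (Hd1 s' (Rlt_le_trans _ _ _ Hd (Rmin_l _ _))).
  specialize (Hd2 s' (Rlt_le_trans _ _ _ Hd (Rmin_r _ _))).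
  destruct (m_spec s' Hs') as [Hv' _].
  destruct (Rlt_le_dec (Rabs (m s' - v)) eps) as [|Hge]; auto; exfalso.
  specialize (Hfar (m s') Hv' Hge); unfold v in Hfar.
  rewrite (sqdist_mirror s s' Hs Hs') in Hfar; unfold sqdist in Hfar.
  apply Rabs_def2 in Hd1; apply Rabs_def2 in Hd2; destruct Hd1, Hd2; nra.
Qed.

(* [m] is only meaningful on [[0, l]]; clamping makes it a continuous function on [R]. *)
Definition mirror_ext (t : R) : R := m (clamp l t).

Lemma mirror_ext_continuous : continuity mirror_ext.
Proof.
  intros t; rewrite continuity_pt_locally; intros eps.
  destruct (mirror_continuous (clamp l t) (clamp_in l t ltac:(lra)) eps (cond_pos eps))
    as [d [Hd H]].
  exists (mkposreal d Hd); intros u Hu; simpl in Hu; unfold mirror_ext.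
  apply H; [apply clamp_in; lra | eapply Rle_lt_trans; [apply clamp_lipschitz; lra | exact Hu]].
Qed.

Lemma mirror_ext_eq t : 0 <= t <= l -> mirror_ext t = m t.
Proof. intros; unfold mirror_ext; rewrite clamp_id; auto. Qed.

Lemma mirror_decreasing s t : 0 <= s <= l -> 0 <= t <= l -> s < t -> m t < m s.
Proof.
  intros Hs Ht Hst; destruct (Rlt_le_dec (m t) (m s)) as [|Hle]; auto; exfalso.
  destruct (Req_dec (m t) (m s)) as [E|Hne]; [apply mirror_inj in E; lra|].
  destruct (Req_dec s 0) as [->|Hs0].
  { rewrite mirror_0 in Hle, Hne; destruct (m_spec t Ht); lra. }
  destruct (IVT_gen mirror_ext 0 s (m t) mirror_ext_continuous) as [r [Hr Er]].
  { rewrite !mirror_ext_eq, mirror_0 by lra; destruct (m_spec t Ht).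
    unfold Rmin, Rmax; destruct Rle_dec; lra. }
  rewrite Rmin_left, Rmax_right in Hr by lra.
  rewrite mirror_ext_eq in Er by lra; apply mirror_inj in Er; lra.
Qed.

(* Both chord ratios [|gamma (s+h) - gamma s|^2 / h^2] and the same chord over
   [(m (s+h) - m s)^2] tend to 1 (unit speed, and [m] is an isometry of the support);
   since [m] decreases, the difference quotient of [m] tends to [-1]. *)
Lemma mirror_derive s : 0 < s < l -> derivable_pt_lim mirror_ext s (-1).
Proof.
  intros Hs eps Heps.
  pose proof (mirror_interior s Hs) as Hv; set (v := m s) in *.
  set (eta := Rmin (1 / 2) (eps / 4)).
  assert (He : 0 < eta) by (unfold eta, Rmin; destruct Rle_dec; lra).
  destruct (chord_ratio_near_1 x y s (dx s) (dy s) (proj1 (is_derive_Reals _ _ _) (x_der s Hs))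
     (proj1 (is_derive_Reals _ _ _) (y_der s Hs)) (unit_speed s Hs) eta He) as [d1 [Hd1 H1]].
  destruct (chord_ratio_near_1 x y v (dx v) (dy v) (proj1 (is_derive_Reals _ _ _) (x_der v Hv))
     (proj1 (is_derive_Reals _ _ _) (y_der v Hv)) (unit_speed v Hv) eta He) as [d2 [Hd2 H2]].
  destruct (mirror_continuous s ltac:(lra) d2 Hd2) as [d3 [Hd3 H3]].
  set (d := Rmin (Rmin d1 d3) (Rmin s (l - s))).
  assert (Hd : 0 < d) by (unfold d, Rmin; repeat destruct Rle_dec; lra).
  exists (mkposreal d Hd); intros h Hh Hhd; simpl in Hhd.
  assert (Hhd' : Rabs h < d1 /\ Rabs h < d3 /\ Rabs h < s /\ Rabs h < l - s)
    by (unfold d, Rmin in Hhd; repeat destruct Rle_dec; lra).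
  destruct Hhd' as [Hh1 [Hh3 [Hhs Hhl]]].
  assert (Ht : 0 < s + h < l) by (apply Rabs_def2 in Hhs; apply Rabs_def2 in Hhl; lra).
  rewrite !mirror_ext_eq by lra; fold v.
  set (kk := m (s + h) - v).
  assert (Hk : kk <> 0).
  { unfold kk; intros E; assert (E' : m (s + h) = m s) by (fold v; lra).
    apply mirror_inj in E'; lra. }
  assert (Hkd : Rabs kk < d2) by (apply H3; [lra | replace (s + h - s) with h by ring; exact Hh3]).
  specialize (H1 h Hh Hh1); specialize (H2 kk Hk Hkd).
  replace (v + kk) with (m (s + h)) in H2 by (unfold kk; ring).
  fold (sqdist s (s + h)) in H1; fold (sqdist v (m (s + h))) in H2.
  unfold v in H2; rewrite sqdist_mirror in H2 by lra.
  apply (neg_ratio_near_minus_1 _ _ (kk / h) eta eps H1 H2);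
    [apply Rmin_l | apply Rmin_r | field; auto |].
  destruct (Rlt_le_dec 0 h) as [Hp|Hn].
  - assert (m (s + h) < m s) by (apply mirror_decreasing; lra).
    assert (kk < 0) by (unfold kk, v; lra).
    unfold Rdiv; apply Rmult_neg_pos; auto; apply Rinv_0_lt_compat; lra.
  - assert (m s < m (s + h)) by (apply mirror_decreasing; lra).
    assert (0 < kk) by (unfold kk, v; lra).
    unfold Rdiv; apply Rmult_pos_neg; auto; apply Rinv_lt_0_compat; lra.
Qed.

Lemma mirror_eq s : 0 <= s <= l -> m s = l - s.
Proof.
  intros Hs.
  assert (E : mirror_ext s + s = mirror_ext 0 + 0).
  { apply (const_of_derive_0 (fun t => mirror_ext t + t) 0 l); [lra | | | lra].
    - intros t Ht; apply is_derive_lim; rewrite <- (Rplus_opp_l 1).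
      apply (derivable_pt_lim_plus mirror_ext (fun u => u));
        [apply mirror_derive, Ht | apply derivable_pt_lim_id].
    - intros t Ht; apply continuity_pt_plus; [apply mirror_ext_continuous | apply continuity_pt_id]. }
  rewrite !mirror_ext_eq, mirror_0 in E by lra; lra.
Qed.

End Mirror.

Lemma reflection_reverses_parameter (x y dx dy : R -> R) l :
  0 < l ->
  (forall t, 0 <= t <= l -> continuity_pt x t) ->
  (forall t, 0 <= t <= l -> continuity_pt y t) ->
  (forall t, 0 < t < l -> is_derive x t (dx t)) ->
  (forall t, 0 < t < l -> is_derive y t (dy t)) ->
  (forall t, 0 < t < l -> dx t * dx t + dy t * dy t = 1) ->
  (forall s t, 0 <= s <= l -> 0 <= t <= l -> x s = x t -> y s = y t -> s = t) ->
  x l = - x 0 -> y l = y 0 ->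
  (forall s, 0 <= s <= l -> exists t, 0 <= t <= l /\ x t = - x s /\ y t = y s) ->
  forall s, 0 <= s <= l -> x (l - s) = - x s /\ y (l - s) = y s.
Proof.
  intros Hl Cx Cy Dx Dy Hsp Hinj Hxl Hyl Hsym.
  destruct (choice (fun s t => 0 <= s <= l -> 0 <= t <= l /\ x t = - x s /\ y t = y s))
    as [m Hm].
  { intros s; destruct (classic (0 <= s <= l)) as [H|H].
    - destruct (Hsym s H) as [t Ht]; exists t; auto.
    - exists 0; intros; contradiction. }
  intros s Hs; rewrite <- (mirror_eq x y dx dy l Hl Cx Cy Dx Dy Hsp Hinj Hxl Hyl m Hm s Hs).
  apply Hm, Hs.
Qed.

(** * Structure of a solution *)

Lemma derive_of_reflected_eq (f g : R -> R) c l t a b : 0 < t < l ->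
  (forall u, 0 < u < l -> f (l - u) = c * g u) ->
  is_derive f (l - t) a -> is_derive g t b -> - a = c * b.
Proof.
  intros Ht E Hf Hg.
  assert (H1 : is_derive (fun u => f (l - u)) t (a * -1)).
  { apply is_derive_Rcomp; auto. auto_derive; [exact I | ring]. }
  assert (H2 : is_derive (fun u => c * g u) t (0 * g t + c * b))
    by (apply is_derive_Rmult; [apply is_derive_Rconst | exact Hg]).
  apply is_derive_ext_loc with (g := fun u => c * g u) in H1.
  - apply is_derive_unique in H1; apply is_derive_unique in H2.
    assert (a * -1 = 0 * g t + c * b) by (rewrite <- H1; exact H2); lra.
  - apply (filter_imp (fun u => 0 < u < l)); [exact E |].
    apply (open_and _ _ (open_gt 0) (open_lt l)); exact Ht.
Qed.

Section Solution.
Variables (x0 L lam e : R) (x y : R -> R).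
Hypothesis x0_pos : 0 < x0.
Hypothesis lam_pos : 0 < lam.
Hypothesis L_pos : 0 < L.
Hypothesis e_pos : 0 < e.
Hypothesis x_smooth : forall n t, -e < t < 2 * L + e -> ex_derive_n x n t.
Hypothesis y_smooth : forall n t, -e < t < 2 * L + e -> ex_derive_n y n t.
Hypothesis curvature_pos : forall s, 0 <= s <= 2 * L -> 0 < curvature x y s.
Hypothesis curve_inj : forall s t, 0 <= s <= 2 * L -> 0 <= t <= 2 * L ->
  x s = x t -> y s = y t -> s = t.
Hypothesis x_0 : x 0 = x0.
Hypothesis y_0 : y 0 = 0.
Hypothesis x_2L : x (2 * L) = - x0.
Hypothesis y_2L : y (2 * L) = 0.
Hypothesis y_pos : forall s, 0 < s < 2 * L -> 0 < y s.
Hypothesis symmetric : vert_symmetric L x y.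
Hypothesis arclength : arclength_param L x y.
Hypothesis dy_0 : Derive y 0 = 0.
Hypothesis dy_2L : Derive y (2 * L) = 0.
Hypothesis equation : forall s, 0 <= s <= 2 * L ->
  2 + Derive_n (fun t => / (curvature x y t) ^ 2) 2 s = lam.

Let J t := -e < t < 2 * L + e.
Let I0 t := 0 < t < 2 * L.

Lemma open_J : open J.
Proof. apply open_and; [apply open_gt | apply open_lt]. Qed.

Lemma open_I0 : open I0.
Proof. apply open_and; [apply open_gt | apply open_lt]. Qed.

Lemma J_of_interval t : 0 <= t <= 2 * L -> J t.
Proof. unfold J; lra. Qed.

Lemma Cn_on_x n : Cn_on J n x.
Proof. intros k t _ Ht; apply x_smooth, Ht. Qed.

Lemma Cn_on_y n : Cn_on J n y.
Proof. intros k t _ Ht; apply y_smooth, Ht. Qed.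

Lemma is_derive_x t : J t -> is_derive x t (Derive x t).
Proof. apply (Cn_on_is_derive J 0), Cn_on_x. Qed.
Lemma is_derive_y t : J t -> is_derive y t (Derive y t).
Proof. apply (Cn_on_is_derive J 0), Cn_on_y. Qed.
Lemma is_derive_dx t : J t -> is_derive (Derive x) t (Derive (Derive x) t).
Proof. apply (Cn_on_is_derive J 0), Cn_on_Derive, Cn_on_x. Qed.
Lemma is_derive_dy t : J t -> is_derive (Derive y) t (Derive (Derive y) t).
Proof. apply (Cn_on_is_derive J 0), Cn_on_Derive, Cn_on_y. Qed.
Lemma is_derive_ddx t : J t -> is_derive (Derive (Derive x)) t (Derive (Derive (Derive x)) t).
Proof. apply (Cn_on_is_derive J 0), Cn_on_Derive, Cn_on_Derive, Cn_on_x. Qed.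
Lemma is_derive_ddy t : J t -> is_derive (Derive (Derive y)) t (Derive (Derive (Derive y)) t).
Proof. apply (Cn_on_is_derive J 0), Cn_on_Derive, Cn_on_Derive, Cn_on_y. Qed.

Lemma continuity_x t : 0 <= t <= 2 * L -> continuity_pt x t.
Proof. intros Ht; exact (is_derive_continuity_pt _ _ _ (is_derive_x t (J_of_interval t Ht))). Qed.
Lemma continuity_y t : 0 <= t <= 2 * L -> continuity_pt y t.
Proof. intros Ht; exact (is_derive_continuity_pt _ _ _ (is_derive_y t (J_of_interval t Ht))). Qed.
Lemma continuity_dx t : 0 <= t <= 2 * L -> continuity_pt (Derive x) t.
Proof. intros Ht; exact (is_derive_continuity_pt _ _ _ (is_derive_dx t (J_of_interval t Ht))). Qed.
Lemma continuity_dy t : 0 <= t <= 2 * L -> continuity_pt (Derive y) t.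
Proof. intros Ht; exact (is_derive_continuity_pt _ _ _ (is_derive_dy t (J_of_interval t Ht))). Qed.
Lemma continuity_ddx t : 0 <= t <= 2 * L -> continuity_pt (Derive (Derive x)) t.
Proof. intros Ht; exact (is_derive_continuity_pt _ _ _ (is_derive_ddx t (J_of_interval t Ht))). Qed.
Lemma continuity_ddy t : 0 <= t <= 2 * L -> continuity_pt (Derive (Derive y)) t.
Proof. intros Ht; exact (is_derive_continuity_pt _ _ _ (is_derive_ddy t (J_of_interval t Ht))). Qed.

Lemma unit_speed s : 0 <= s <= 2 * L ->
  Derive x s * Derive x s + Derive y s * Derive y s = 1.
Proof. intros Hs; pose proof (arclength s Hs); simpl in *; lra. Qed.

Definition kappa (t : R) : R :=
  Derive x t * Derive (Derive y) t - Derive y t * Derive (Derive x) t.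

Lemma curvature_eq_kappa s : 0 <= s <= 2 * L -> curvature x y s = kappa s.
Proof. intros Hs; unfold curvature; rewrite (arclength s Hs), sqrt_1; unfold kappa; field. Qed.

Lemma kappa_pos s : 0 <= s <= 2 * L -> 0 < kappa s.
Proof. intros Hs; rewrite <- curvature_eq_kappa; auto. Qed.

Lemma tangent_orth_accel t : 0 < t < 2 * L ->
  Derive x t * Derive (Derive x) t + Derive y t * Derive (Derive y) t = 0.
Proof.
  intros Ht; assert (Hi : J t) by (apply J_of_interval; lra).
  pose proof (is_derive_Rplus _ _ t _ _ (is_derive_Rmult _ _ t _ _ (is_derive_dx t Hi) (is_derive_dx t Hi))
                                (is_derive_Rmult _ _ t _ _ (is_derive_dy t Hi) (is_derive_dy t Hi))) as H1.
  assert (H2 : is_derive (fun u => Derive x u * Derive x u + Derive y u * Derive y u) t 0).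
  { apply is_derive_ext_loc with (fun _ => 1); [| apply is_derive_Rconst].
    apply (filter_imp I0); [| apply open_I0, Ht].
    intros u Hu; symmetry; apply unit_speed; unfold I0 in Hu; lra. }
  apply is_derive_unique in H1; apply is_derive_unique in H2.
  rewrite H1 in H2; lra.
Qed.

Lemma frenet_x t : 0 < t < 2 * L -> Derive (Derive x) t = - kappa t * Derive y t.
Proof.
  intros Ht; pose proof (tangent_orth_accel t Ht) as H; pose proof (unit_speed t ltac:(lra)) as H1.
  unfold kappa; set (a := Derive x t) in *; set (b := Derive y t) in *.
  set (c := Derive (Derive x) t) in *; set (d := Derive (Derive y) t) in *.
  transitivity (c * (a * a + b * b)); [rewrite H1; ring|].
  replace (c * (a * a + b * b)) with (a * (a * c + b * d) - (a * d - b * c) * b) by ring.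
  rewrite H; ring.
Qed.

Lemma frenet_y t : 0 < t < 2 * L -> Derive (Derive y) t = kappa t * Derive x t.
Proof.
  intros Ht; pose proof (tangent_orth_accel t Ht) as H; pose proof (unit_speed t ltac:(lra)) as H1.
  unfold kappa; set (a := Derive x t) in *; set (b := Derive y t) in *.
  set (c := Derive (Derive x) t) in *; set (d := Derive (Derive y) t) in *.
  transitivity (d * (a * a + b * b)); [rewrite H1; ring|].
  replace (d * (a * a + b * b)) with (b * (a * c + b * d) + (a * d - b * c) * a) by ring.
  rewrite H; ring.
Qed.

Definition inv_kappa2 (t : R) : R := / (kappa t) ^ 2.

Lemma Cn_on_kappa n : Cn_on I0 n kappa.
Proof.
  apply (Cn_on_subset I0 J); [unfold I0, J; intros; lra |]; unfold kappa.
  apply Cn_on_minus; [apply open_J | |]; apply Cn_on_mult;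
    auto using open_J, Cn_on_Derive, Cn_on_x, Cn_on_y.
Qed.

Lemma Cn_on_inv_kappa2 n : Cn_on I0 n inv_kappa2.
Proof.
  apply Cn_on_ext with (fun t => / (kappa t * kappa t)); [intros; unfold inv_kappa2; simpl; f_equal; ring|].
  apply (Cn_on_comp I0 positives n Rinv (fun t => kappa t * kappa t));
    auto using open_I0, open_positives, Cn_on_Rinv.
  - intros t Ht; pose proof (kappa_pos t ltac:(unfold I0 in Ht; lra)); unfold positives; nra.
  - apply Cn_on_mult; auto using open_I0, Cn_on_kappa.
Qed.

Lemma inv_kappa2_ode s : 0 < s < 2 * L -> Derive (Derive inv_kappa2) s = lam - 2.
Proof.
  intros Hs; rewrite <- (equation s ltac:(lra)).
  change (Derive (Derive inv_kappa2) s) with (Derive_n inv_kappa2 2 s).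
  enough (Derive_n inv_kappa2 2 s = Derive_n (fun t => / (curvature x y t) ^ 2) 2 s) by lra.
  apply Derive_n_ext_loc, (filter_imp I0); [| apply open_I0, Hs].
  intros u Hu; unfold inv_kappa2; rewrite curvature_eq_kappa; auto; unfold I0 in Hu; lra.
Qed.

Definition q0 : R := inv_kappa2 L.
Definition q1 : R := Derive inv_kappa2 L.
Definition q2 : R := (lam - 2) / 2.

Lemma inv_kappa2_quadratic s : 0 < s < 2 * L ->
  inv_kappa2 s = q0 + q1 * (s - L) + q2 * (s - L) ^ 2.
Proof.
  intros Hs; assert (HL : 0 < L < 2 * L) by lra.
  assert (D1 : forall t, 0 < t < 2 * L -> is_derive inv_kappa2 t (Derive inv_kappa2 t))
    by (intros t Ht; apply (Cn_on_is_derive I0 0); auto using Cn_on_inv_kappa2).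
  assert (D2 : forall t, 0 < t < 2 * L -> is_derive (Derive inv_kappa2) t (lam - 2)).
  { intros t Ht; rewrite <- (inv_kappa2_ode t Ht).
    apply (Cn_on_is_derive I0 0); auto using Cn_on_Derive, Cn_on_inv_kappa2. }
  assert (E1 : forall t, 0 < t < 2 * L -> Derive inv_kappa2 t = q1 + (lam - 2) * (t - L)).
  { intros t Ht; unfold q1.
    enough (Derive inv_kappa2 t - Derive inv_kappa2 L = (lam - 2) * t - (lam - 2) * L) by lra.
    apply (increment_eq_of_derive_eq_open _ (fun u => (lam - 2) * u) (fun _ => lam - 2)
      0 (2 * L) D2); auto.
    intros u Hu; auto_derive; [exact I | ring]. }
  enough (inv_kappa2 s - inv_kappa2 L =
    (q1 * (s - L) + q2 * (s - L) ^ 2) - (q1 * (L - L) + q2 * (L - L) ^ 2)) by (unfold q0; lra).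
  apply (increment_eq_of_derive_eq_open _ (fun u => q1 * (u - L) + q2 * (u - L) ^ 2)
    (Derive inv_kappa2) 0 (2 * L) D1); auto.
  intros u Hu; rewrite E1 by auto; auto_derive; auto; unfold q2; field.
Qed.

Lemma curve_symmetric s : 0 <= s <= 2 * L -> x (2 * L - s) = - x s /\ y (2 * L - s) = y s.
Proof.
  apply (reflection_reverses_parameter x y (Derive x) (Derive y)); try lra;
    auto using continuity_x, continuity_y.
  - intros t Ht; apply is_derive_x, J_of_interval; lra.
  - intros t Ht; apply is_derive_y, J_of_interval; lra.
  - intros t Ht; apply unit_speed; lra.
Qed.

Lemma dxy_symmetric t : 0 < t < 2 * L ->
  Derive x (2 * L - t) = Derive x t /\ Derive y (2 * L - t) = - Derive y t.
Proof.
  intros Ht; split.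
  - enough (- Derive x (2 * L - t) = -1 * Derive x t) by lra.
    apply (derive_of_reflected_eq x x (-1) (2 * L) t); auto;
      try (apply is_derive_x, J_of_interval; lra).
    intros u Hu; rewrite (proj1 (curve_symmetric u ltac:(lra))); ring.
  - enough (- Derive y (2 * L - t) = 1 * Derive y t) by lra.
    apply (derive_of_reflected_eq y y 1 (2 * L) t); auto;
      try (apply is_derive_y, J_of_interval; lra).
    intros u Hu; rewrite (proj2 (curve_symmetric u ltac:(lra))); ring.
Qed.

Lemma ddxy_symmetric t : 0 < t < 2 * L ->
  Derive (Derive x) (2 * L - t) = - Derive (Derive x) t /\
  Derive (Derive y) (2 * L - t) = Derive (Derive y) t.
Proof.
  intros Ht; split.
  - enough (- Derive (Derive x) (2 * L - t) = 1 * Derive (Derive x) t) by lra.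
    apply (derive_of_reflected_eq (Derive x) (Derive x) 1 (2 * L) t); auto;
      try (apply is_derive_dx, J_of_interval; lra).
    intros u Hu; rewrite (proj1 (dxy_symmetric u Hu)); ring.
  - enough (- Derive (Derive y) (2 * L - t) = -1 * Derive (Derive y) t) by lra.
    apply (derive_of_reflected_eq (Derive y) (Derive y) (-1) (2 * L) t); auto;
      try (apply is_derive_dy, J_of_interval; lra).
    intros u Hu; rewrite (proj2 (dxy_symmetric u Hu)); ring.
Qed.

Lemma kappa_symmetric t : 0 < t < 2 * L -> kappa (2 * L - t) = kappa t.
Proof.
  intros Ht; unfold kappa.
  destruct (dxy_symmetric t Ht) as [-> ->]; destruct (ddxy_symmetric t Ht) as [-> ->]; ring.
Qed.

Lemma q1_eq_0 : q1 = 0.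
Proof.
  assert (E : inv_kappa2 (2 * L - L / 2) = inv_kappa2 (L / 2))
    by (unfold inv_kappa2; rewrite kappa_symmetric; auto; lra).
  rewrite !inv_kappa2_quadratic in E by lra.
  replace (2 * L - L / 2 - L) with (L / 2) in E by field.
  replace (L / 2 - L) with (- (L / 2)) in E by field.
  assert (q1 * L = 0) as H by nra.
  apply Rmult_integral in H; destruct H; lra.
Qed.

Lemma inv_kappa2_even s : 0 < s < 2 * L -> inv_kappa2 s = q0 + q2 * (s - L) ^ 2.
Proof. intros; rewrite inv_kappa2_quadratic, q1_eq_0 by auto; ring. Qed.

Lemma continuity_kappa t : 0 <= t <= 2 * L -> continuity_pt kappa t.
Proof.
  intros Ht; unfold kappa; apply continuity_pt_minus; apply continuity_pt_mult;
    auto using continuity_dx, continuity_dy, continuity_ddx, continuity_ddy.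
Qed.

Lemma q0_pos : 0 < q0.
Proof.
  unfold q0, inv_kappa2; pose proof (kappa_pos L ltac:(lra)).
  apply Rinv_0_lt_compat, pow_lt; auto.
Qed.

Lemma q0_q2_pos : 0 < q0 + q2 * L ^ 2.
Proof.
  set (g := fun s => kappa s ^ 2 * (q0 + q2 * (s - L) ^ 2)).
  assert (E : g 0 = 1).
  { apply (continuity_pt_eq_right g 0 (2 * L)); [lra | |].
    - unfold g; apply continuity_pt_mult.
      + apply (continuity_pt_comp kappa (fun u => u ^ 2)); [apply continuity_kappa; lra |].
        apply derivable_continuous_pt, derivable_pt_pow.
      + apply derivable_continuous_pt; reg.
    - intros s Hs; unfold g; rewrite <- inv_kappa2_even by auto; unfold inv_kappa2.
      pose proof (kappa_pos s ltac:(lra)); field; lra. }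
  unfold g in E; pose proof (kappa_pos 0 ltac:(lra)).
  replace ((0 - L) ^ 2) with (L ^ 2) in E by ring.
  assert (0 < kappa 0 ^ 2) by (apply pow_lt; lra); nra.
Qed.

Section TangentAngle.
Variable th : R -> R.
Hypothesis th_cont : forall s, 0 <= s <= 2 * L -> continuity_pt th s.
Hypothesis th_0 : th 0 = 0.
Hypothesis th_der : forall s, 0 < s < 2 * L -> is_derive th s (kappa s).

Lemma is_derive_cos_th t : 0 < t < 2 * L -> is_derive (fun u => cos (th u)) t (- sin (th t) * kappa t).
Proof.
  intros Ht; apply (is_derive_Rcomp cos th);
    [apply th_der, Ht | apply is_derive_lim, derivable_pt_lim_cos].
Qed.

Lemma is_derive_sin_th t : 0 < t < 2 * L -> is_derive (fun u => sin (th u)) t (cos (th t) * kappa t).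
Proof.
  intros Ht; apply (is_derive_Rcomp sin th); [apply th_der, Ht | apply is_derive_lim, derivable_pt_lim_sin].
Qed.

Lemma continuity_cos_sin_th t : 0 <= t <= 2 * L ->
  continuity_pt (fun u => cos (th u)) t /\ continuity_pt (fun u => sin (th u)) t.
Proof.
  intros Ht; split; [apply (continuity_pt_comp th cos) | apply (continuity_pt_comp th sin)];
    auto using continuity_cos, continuity_sin.
Qed.

Lemma tangent_in_rotated_frame s : 0 <= s <= 2 * L ->
  Derive x s * cos (th s) + Derive y s * sin (th s) = Derive x 0 /\
  Derive y s * cos (th s) - Derive x s * sin (th s) = 0.
Proof.
  intros Hs.
  set (u := fun t => Derive x t * cos (th t) + Derive y t * sin (th t)).
  set (v := fun t => Derive y t * cos (th t) - Derive x t * sin (th t)).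
  assert (Hdx : forall t, 0 < t < 2 * L -> is_derive (Derive x) t (- kappa t * Derive y t))
    by (intros t Ht; rewrite <- frenet_x by exact Ht; apply is_derive_dx, J_of_interval; lra).
  assert (Hdy : forall t, 0 < t < 2 * L -> is_derive (Derive y) t (kappa t * Derive x t))
    by (intros t Ht; rewrite <- frenet_y by exact Ht; apply is_derive_dy, J_of_interval; lra).
  assert (Hu : u s = u 0).
  { apply (const_of_derive_0 u 0 (2 * L)); auto; try lra.
    - intros t Ht; eapply is_derive_eq; [intros; reflexivity | |
        apply is_derive_Rplus; apply is_derive_Rmult;
        auto using is_derive_cos_th, is_derive_sin_th].
      cbv beta; ring.
    - intros t Ht; destruct (continuity_cos_sin_th t Ht).
      apply continuity_pt_plus; apply continuity_pt_mult; auto using continuity_dx, continuity_dy. }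
  assert (Hv : v s = v 0).
  { apply (const_of_derive_0 v 0 (2 * L)); auto; try lra.
    - intros t Ht; eapply is_derive_eq; [intros; reflexivity | |
        apply is_derive_Rminus; apply is_derive_Rmult;
        auto using is_derive_cos_th, is_derive_sin_th].
      cbv beta; ring.
    - intros t Ht; destruct (continuity_cos_sin_th t Ht).
      apply continuity_pt_minus; apply continuity_pt_mult; auto using continuity_dx, continuity_dy. }
  unfold u, v in Hu, Hv; rewrite th_0, cos_0, sin_0, dy_0 in Hu, Hv; split; lra.
Qed.

Lemma tangent_eq_rotation s : 0 <= s <= 2 * L ->
  Derive x s = Derive x 0 * cos (th s) /\ Derive y s = Derive x 0 * sin (th s).
Proof.
  intros Hs; destruct (tangent_in_rotated_frame s Hs) as [Hu Hv].
  pose proof (sin2_cos2_mult (th s)) as H1; rewrite <- Hu; split.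
  - transitivity (Derive x s * (sin (th s) * sin (th s) + cos (th s) * cos (th s)));
      [rewrite H1; ring |].
    transitivity ((Derive x s * cos (th s) + Derive y s * sin (th s)) * cos (th s)
      - (Derive y s * cos (th s) - Derive x s * sin (th s)) * sin (th s)); [ring | rewrite Hv; ring].
  - transitivity (Derive y s * (sin (th s) * sin (th s) + cos (th s) * cos (th s)));
      [rewrite H1; ring |].
    transitivity ((Derive x s * cos (th s) + Derive y s * sin (th s)) * sin (th s)
      + (Derive y s * cos (th s) - Derive x s * sin (th s)) * cos (th s)); [ring | rewrite Hv; ring].
Qed.

Lemma th_strict_incr s t : 0 <= s -> s < t -> t <= 2 * L -> th s < th t.
Proof.
  intros; apply (strict_incr_of_derive_pos th kappa 0 (2 * L)); auto.
  intros u Hu; apply kappa_pos; lra.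
Qed.

Lemma th_close u0 : 0 <= u0 <= 2 * L -> exists d, 0 < d /\
  forall u, Rabs (u - u0) < d -> Rabs (th u - th u0) < PI.
Proof.
  intros Hu; pose proof (th_cont u0 Hu) as C; rewrite continuity_pt_locally in C.
  destruct (C (mkposreal PI PI_RGT_0)) as [d Hd].
  exists d; split; [apply cond_pos | exact Hd].
Qed.

(* The tangent at [0] is horizontal; it must point right, or [y] would turn negative. *)
Lemma dx_0 : Derive x 0 = 1.
Proof.
  pose proof (unit_speed 0 ltac:(lra)) as H; rewrite dy_0 in H.
  destruct (Req_dec (Derive x 0) 1) as [|Hne]; auto; exfalso.
  assert (Hm : Derive x 0 = -1) by nra.
  destruct (th_close 0 ltac:(lra)) as [d [Hd Hc]].
  set (s1 := Rmin (d / 2) L).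
  assert (Hs1 : 0 < s1 <= L /\ s1 < d) by (unfold s1, Rmin; destruct Rle_dec; lra).
  destruct (MVT_is_derive y (Derive y) 0 s1) as [c [Hc1 E]]; [lra | | |].
  - intros t Ht; apply is_derive_y, J_of_interval; lra.
  - intros t Ht; apply continuity_y; lra.
  - rewrite (proj2 (tangent_eq_rotation c ltac:(lra))), Hm, y_0 in E.
    assert (T1 : 0 < th c) by (rewrite <- th_0; apply th_strict_incr; lra).
    assert (T2 : th c < PI).
    { specialize (Hc c ltac:(rewrite Rminus_0_r, Rabs_right; lra)).
      rewrite th_0, Rminus_0_r in Hc; apply Rabs_def2 in Hc; lra. }
    pose proof (sin_gt_0 _ T1 T2); pose proof (y_pos s1 ltac:(lra)); nra.
Qed.

Lemma tangent_eq_angle s : 0 <= s <= 2 * L ->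
  Derive x s = cos (th s) /\ Derive y s = sin (th s).
Proof.
  intros Hs; destruct (tangent_eq_rotation s Hs) as [-> ->]; rewrite dx_0; split; ring.
Qed.

Lemma th_2L : cos (th (2 * L)) = 1 /\ sin (th (2 * L)) = 0.
Proof.
  assert (Hs : sin (th (2 * L)) = 0) by (rewrite <- (proj2 (tangent_eq_angle (2 * L) ltac:(lra))); auto).
  split; auto.
  pose proof (sin2_cos2_mult (th (2 * L))) as Hsc; rewrite Hs in Hsc.
  destruct (Req_dec (cos (th (2 * L))) 1) as [|Hne]; auto; exfalso.
  assert (Hm : cos (th (2 * L)) = -1) by nra.
  destruct (th_close (2 * L) ltac:(lra)) as [d [Hd Hc]].
  set (s1 := 2 * L - Rmin (d / 2) L).
  assert (Hs1 : L <= s1 < 2 * L /\ 2 * L - s1 < d) by (unfold s1, Rmin; destruct Rle_dec; lra).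
  destruct (MVT_is_derive y (Derive y) s1 (2 * L)) as [c [Hc1 E]]; [lra | | |].
  - intros t Ht; apply is_derive_y, J_of_interval; lra.
  - intros t Ht; apply continuity_y; lra.
  - rewrite (proj2 (tangent_eq_angle c ltac:(lra))), y_2L in E.
    assert (T1 : th c < th (2 * L)) by (apply th_strict_incr; lra).
    assert (T2 : th (2 * L) - th c < PI).
    { specialize (Hc c ltac:(rewrite Rabs_left; lra)); rewrite Rabs_left in Hc by lra; lra. }
    replace (th c) with (th (2 * L) - (th (2 * L) - th c)) in E by ring.
    rewrite sin_minus, Hs, Hm in E.
    pose proof (sin_gt_0 (th (2 * L) - th c) ltac:(lra) T2).
    pose proof (y_pos s1 ltac:(lra)); nra.
Qed.

Lemma x_increment (G : R -> R) :
  (forall t, 0 < t < 2 * L -> is_derive G t (cos (th t))) ->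
  (forall t, 0 <= t <= 2 * L -> continuity_pt G t) ->
  forall s, 0 <= s <= 2 * L -> x s - x 0 = G s - G 0.
Proof.
  intros HG CG; apply (increment_eq_of_derive_eq x G (fun t => cos (th t)) 0 (2 * L));
    auto using continuity_x; [lra |].
  intros t Ht; rewrite <- (proj1 (tangent_eq_angle t ltac:(lra))).
  apply is_derive_x, J_of_interval; lra.
Qed.

Lemma y_increment (G : R -> R) :
  (forall t, 0 < t < 2 * L -> is_derive G t (sin (th t))) ->
  (forall t, 0 <= t <= 2 * L -> continuity_pt G t) ->
  forall s, 0 <= s <= 2 * L -> y s - y 0 = G s - G 0.
Proof.
  intros HG CG; apply (increment_eq_of_derive_eq y G (fun t => sin (th t)) 0 (2 * L));
    auto using continuity_y; [lra |].
  intros t Ht; rewrite <- (proj2 (tangent_eq_angle t ltac:(lra))).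
  apply is_derive_y, J_of_interval; lra.
Qed.
End TangentAngle.

Lemma kappa_of_inv_kappa2 s D : 0 < s < 2 * L -> 0 < D -> D * D * inv_kappa2 s = 1 -> kappa s = D.
Proof.
  intros Hs HD E; pose proof (kappa_pos s ltac:(lra)) as Hk; unfold inv_kappa2 in E.
  assert (E2 : D * D = kappa s * kappa s).
  { apply (Rmult_eq_reg_r (/ kappa s ^ 2)); [rewrite E; simpl; field; lra |].
    apply Rgt_not_eq, Rinv_0_lt_compat, pow_lt; lra. }
  nra.
Qed.

Lemma q2_ne_0 : q2 <> 0.
Proof.
  intros Hq; pose proof q0_pos as Hq0.
  set (r := sqrt q0); assert (Hr : 0 < r) by (apply sqrt_lt_R0; auto).
  assert (Hr2 : r * r = q0) by (apply sqrt_sqrt; lra).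
  set (th := fun s => s / r).
  assert (Hth : forall s, is_derive th s (/ r)) by (intros; unfold th; auto_derive; [exact I | field; lra]).
  assert (th_der : forall s, 0 < s < 2 * L -> is_derive th s (kappa s)).
  { intros s Hs; rewrite (kappa_of_inv_kappa2 s (/ r)); auto.
    - apply Rinv_0_lt_compat, Hr.
    - rewrite inv_kappa2_even, Hq, <- Hr2 by auto; field; lra. }
  assert (th_0 : th 0 = 0) by (unfold th, Rdiv; ring).
  set (G := fun s => r * sin (s / r)).
  assert (HG : forall t, is_derive G t (cos (th t)))
    by (intros; unfold G, th; auto_derive; [exact I | unfold Rdiv; field; lra]).
  assert (Hth_cont : forall s, 0 <= s <= 2 * L -> continuity_pt th s)
    by (intros s _; apply (is_derive_continuity_pt _ _ _ (Hth s))).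
  pose proof (x_increment th Hth_cont th_0 th_der G (fun t _ => HG t)
    (fun t _ => is_derive_continuity_pt _ _ _ (HG t)) (2 * L) ltac:(lra)) as E.
  destruct (th_2L th Hth_cont th_0 th_der) as [_ Hs].
  unfold G in E; unfold th in Hs; rewrite Hs, x_0, x_2L in E.
  replace (0 / r) with 0 in E by (unfold Rdiv; ring); rewrite sin_0 in E; lra.
Qed.

Lemma kappa_of_pos_q2 w k s : 0 < q2 -> 0 < w -> 0 < k -> w * w = / q2 -> k * k = q0 / q2 ->
  0 < s < 2 * L -> kappa s = w * (/ k * / sqrt (((s - L) / k) ^ 2 + 1)).
Proof.
  intros Hq Hw Hk Hw2 Hk2 Hs; pose proof (sqrt_sqr_plus_1_pos ((s - L) / k)) as Hsq.
  apply kappa_of_inv_kappa2; auto.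
  - apply Rmult_lt_0_compat, Rmult_lt_0_compat; auto; apply Rinv_0_lt_compat; auto.
  - rewrite inv_kappa2_even by auto.
    assert (Hq2 : sqrt (((s - L) / k) ^ 2 + 1) * sqrt (((s - L) / k) ^ 2 + 1)
                  = ((s - L) / k) ^ 2 + 1)
      by (apply sqrt_sqrt; pose proof (pow2_ge_0 ((s - L) / k)); lra).
    set (q := sqrt (((s - L) / k) ^ 2 + 1)) in *.
    replace (w * (/ k * / q) * (w * (/ k * / q)) * (q0 + q2 * (s - L) ^ 2))
      with ((w * w) * (q0 + q2 * (s - L) ^ 2) / ((k * k) * (q * q))) by (field; lra).
    rewrite Hw2, Hk2, Hq2.
    replace (((s - L) / k) ^ 2) with ((s - L) ^ 2 / (k * k)) by (field; lra).
    rewrite Hk2; pose proof (pow2_ge_0 (s - L)); pose proof q0_pos.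
    field; repeat split; try lra; nra.
Qed.

(* With [q2 > 0] the tangent angle is an [arcsinh], and the resulting horizontal
   displacement [x (2 L) - x 0 = 2 L / (1 + w^2)] has the wrong sign. *)
Lemma q2_not_pos : ~ 0 < q2.
Proof.
  intros Hq; pose proof q0_pos as Hq0.
  set (w := / sqrt q2); set (k := sqrt (q0 / q2)).
  assert (Hw : 0 < w) by (apply Rinv_0_lt_compat, sqrt_lt_R0; auto).
  assert (Hk : 0 < k) by (apply sqrt_lt_R0, Rdiv_lt_0_compat; auto).
  assert (Hw2 : w * w = / q2) by (unfold w; rewrite <- Rinv_mult, sqrt_sqrt; lra).
  assert (Hk2 : k * k = q0 / q2) by (apply sqrt_sqrt, Rlt_le, Rdiv_lt_0_compat; auto).
  set (b := - (w * arcsinh ((0 - L) / k))).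
  set (th := fun s => w * arcsinh ((s - L) / k) + b).
  assert (Hth : forall s, is_derive th s (w * (/ k * / sqrt (((s - L) / k) ^ 2 + 1))))
    by (intros; apply is_derive_angle_arcsinh; auto).
  assert (th_der : forall s, 0 < s < 2 * L -> is_derive th s (kappa s))
    by (intros s Hs; rewrite (kappa_of_pos_q2 w k s); auto).
  assert (Hth_cont : forall s, 0 <= s <= 2 * L -> continuity_pt th s)
    by (intros s _; apply (is_derive_continuity_pt _ _ _ (Hth s))).
  assert (th_0 : th 0 = 0) by (unfold th, b; ring).
  set (G := prim_cos_arcsinh k w b L).
  assert (HG : forall t, is_derive G t (cos (th t)))
    by (intros; apply is_derive_prim_cos_arcsinh; auto).
  pose proof (x_increment th Hth_cont th_0 th_der G (fun t _ => HG t)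
    (fun t _ => is_derive_continuity_pt _ _ _ (HG t)) (2 * L) ltac:(lra)) as E.
  destruct (th_2L th Hth_cont th_0 th_der) as [Hc Hs].
  unfold G, prim_cos_arcsinh in E; unfold th in Hc, Hs, th_0.
  rewrite Hc, Hs, th_0, cos_0, sin_0, x_0, x_2L in E.
  replace ((2 * L - L) / k) with (L / k) in E by (field; lra).
  replace ((0 - L) / k) with (- (L / k)) in E by (field; lra).
  assert (0 < 1 + w ^ 2) by nra.
  assert (- x0 - x0 = 2 * L / (1 + w ^ 2)) by (rewrite E; field; lra).
  assert (0 < 2 * L / (1 + w ^ 2)) by (apply Rdiv_lt_0_compat; nra); lra.
Qed.

Section NegativeLeadingCoefficient.
Hypothesis q2_neg : q2 < 0.

Let w := / sqrt (- q2).
Let k := sqrt (q0 / - q2).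

Lemma w_pos : 0 < w.
Proof. apply Rinv_0_lt_compat, sqrt_lt_R0; lra. Qed.

Lemma k_pos : 0 < k.
Proof. apply sqrt_lt_R0, Rdiv_lt_0_compat; [apply q0_pos | lra]. Qed.

Lemma w_sqr : w * w = / - q2.
Proof. unfold w; rewrite <- Rinv_mult, sqrt_sqrt; lra. Qed.

Lemma k_sqr : k * k = q0 / - q2.
Proof. apply sqrt_sqrt, Rlt_le, Rdiv_lt_0_compat; [apply q0_pos | lra]. Qed.

(* [lam > 0] means [q2 > -1]. *)
Lemma w_gt_1 : 1 < w.
Proof.
  pose proof w_pos; pose proof w_sqr as E; unfold q2 in *.
  assert (1 < w * w) by (rewrite E, <- Rinv_1; apply Rinv_lt_contravar; lra); nra.
Qed.

Lemma L_lt_k : L < k.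
Proof.
  pose proof k_pos; pose proof k_sqr as E; pose proof q0_q2_pos.
  assert (L * L < k * k) by (rewrite E; apply (Rmult_lt_reg_r (- q2)); [lra | field_simplify; nra]).
  nra.
Qed.

Lemma arc_arg_in_ball s : 0 <= s <= 2 * L -> -1 < (s - L) / k < 1.
Proof.
  intros Hs; pose proof k_pos; pose proof L_lt_k.
  split; apply (Rmult_lt_reg_r k); auto; field_simplify; lra.
Qed.

Let alpha := asin (L / k).

Lemma arc_0 : arc k L 0 = - alpha.
Proof. unfold arc, alpha; rewrite <- asin_opp; f_equal; field; pose proof k_pos; lra. Qed.

Lemma arc_2L : arc k L (2 * L) = alpha.
Proof. unfold arc, alpha; f_equal; field; pose proof k_pos; lra. Qed.

Lemma k_sin_alpha : k * sin alpha = L.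
Proof.
  pose proof k_pos; pose proof L_lt_k.
  unfold alpha; rewrite sin_asin; [field; lra |].
  split; apply (Rmult_le_reg_r k); auto; field_simplify; lra.
Qed.

Lemma alpha_bounds : 0 < alpha < PI / 2.
Proof.
  pose proof k_pos; pose proof L_lt_k.
  assert (Hb : -1 < L / k < 1) by (split; apply (Rmult_lt_reg_r k); auto; field_simplify; lra).
  pose proof (asin_bound_lt _ Hb) as Ha; fold alpha in Ha; split; [|lra].
  destruct (Rle_lt_dec alpha 0) as [Hn|]; auto; exfalso.
  pose proof (sin_ge_0 (- alpha) ltac:(lra) ltac:(lra)) as Hs; rewrite sin_neg in Hs.
  pose proof k_sin_alpha; nra.
Qed.

Let th s := w * arc k L s + w * alpha.

Lemma is_derive_th s : 0 <= s <= 2 * L ->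
  is_derive th s (w * (/ k * / sqrt (1 - (s - L) / k * ((s - L) / k)))).
Proof. intros Hs; apply is_derive_angle_arc; [apply k_pos | apply arc_arg_in_ball, Hs]. Qed.

Lemma th_der_kappa s : 0 < s < 2 * L -> is_derive th s (kappa s).
Proof.
  intros Hs; pose proof (arc_arg_in_ball s ltac:(lra)) as Hz; pose proof k_pos; pose proof w_pos.
  pose proof (sqrt_1_minus_sqr_pos _ Hz) as Hq.
  rewrite (kappa_of_inv_kappa2 s (w * (/ k * / sqrt (1 - (s - L) / k * ((s - L) / k)))));
    [apply is_derive_th; lra | exact Hs | |].
  - apply Rmult_lt_0_compat, Rmult_lt_0_compat; auto; apply Rinv_0_lt_compat; auto.
  - assert (HF : 0 < q0 + q2 * (s - L) ^ 2).
    { rewrite <- inv_kappa2_even by auto; unfold inv_kappa2.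
      apply Rinv_0_lt_compat, pow_lt, kappa_pos; lra. }
    rewrite inv_kappa2_even by auto.
    assert (Hq2 : sqrt (1 - (s - L) / k * ((s - L) / k)) * sqrt (1 - (s - L) / k * ((s - L) / k))
                  = 1 - (s - L) / k * ((s - L) / k)) by (apply sqrt_sqrt; nra).
    set (q := sqrt (1 - (s - L) / k * ((s - L) / k))) in *.
    replace (w * (/ k * / q) * (w * (/ k * / q)) * (q0 + q2 * (s - L) ^ 2))
      with ((w * w) * (q0 + q2 * (s - L) ^ 2) / ((k * k) * (q * q))) by (field; lra).
    rewrite w_sqr, Hq2.
    replace ((s - L) / k * ((s - L) / k)) with ((s - L) ^ 2 / (k * k)) by (field; lra).
    rewrite k_sqr; pose proof q0_pos; field; repeat split; lra.
Qed.

Lemma th_cont s : 0 <= s <= 2 * L -> continuity_pt th s.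
Proof. intros Hs; apply (is_derive_continuity_pt _ _ _ (is_derive_th s Hs)). Qed.

Lemma th_0 : th 0 = 0.
Proof. unfold th; rewrite arc_0; ring. Qed.

Lemma sin_cos_w_alpha : sin (w * alpha) = 0 /\ cos (w * alpha) * cos (w * alpha) = 1.
Proof.
  destruct (th_2L th th_cont th_0 th_der_kappa) as [Hc Hs].
  unfold th in Hc, Hs; rewrite arc_2L in Hc, Hs.
  replace (w * alpha + w * alpha) with (2 * (w * alpha)) in Hc, Hs by ring.
  rewrite cos_2a_sin in Hc; assert (Hs0 : sin (w * alpha) = 0) by nra.
  split; auto; pose proof (sin2_cos2_mult (w * alpha)); rewrite Hs0 in *; lra.
Qed.

Lemma x_explicit s : 0 <= s <= 2 * L ->
  x s - x 0 = prim_cos_arc k w (w * alpha) L s - prim_cos_arc k w (w * alpha) L 0.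
Proof.
  assert (D : forall t, 0 <= t <= 2 * L -> is_derive (prim_cos_arc k w (w * alpha) L) t (cos (th t)))
    by (intros; apply is_derive_prim_cos_arc; auto using k_pos, w_gt_1, arc_arg_in_ball).
  apply (x_increment th th_cont th_0 th_der_kappa); intros t Ht;
    [apply D; lra | apply (is_derive_continuity_pt _ _ _ (D t Ht))].
Qed.

Lemma y_explicit s : 0 <= s <= 2 * L ->
  y s - y 0 = prim_sin_arc k w (w * alpha) L s - prim_sin_arc k w (w * alpha) L 0.
Proof.
  assert (D : forall t, 0 <= t <= 2 * L -> is_derive (prim_sin_arc k w (w * alpha) L) t (sin (th t)))
    by (intros; apply is_derive_prim_sin_arc; auto using k_pos, w_gt_1, arc_arg_in_ball).
  apply (y_increment th th_cont th_0 th_der_kappa); intros t Ht;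
    [apply D; lra | apply (is_derive_continuity_pt _ _ _ (D t Ht))].
Qed.

Lemma prim_cos_arc_0 :
  prim_cos_arc k w (w * alpha) L 0 = k / 2 * (- sin alpha / (w + 1) + sin alpha / (w - 1)).
Proof.
  unfold prim_cos_arc; rewrite arc_0.
  replace ((w + 1) * - alpha + w * alpha) with (- alpha) by ring.
  replace ((w - 1) * - alpha + w * alpha) with alpha by ring.
  rewrite sin_neg; reflexivity.
Qed.

Lemma prim_sin_arc_0 :
  prim_sin_arc k w (w * alpha) L 0 = - (k / 2) * (cos alpha / (w + 1) + cos alpha / (w - 1)).
Proof.
  unfold prim_sin_arc; rewrite arc_0.
  replace ((w + 1) * - alpha + w * alpha) with (- alpha) by ring.
  replace ((w - 1) * - alpha + w * alpha) with alpha by ring.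
  rewrite cos_neg; reflexivity.
Qed.

Lemma x0_w_sqr : x0 * (w * w - 1) = L.
Proof.
  pose proof (x_explicit (2 * L) ltac:(lra)) as E; rewrite x_0, x_2L, prim_cos_arc_0 in E.
  destruct sin_cos_w_alpha as [S C].
  unfold prim_cos_arc in E; rewrite arc_2L in E.
  replace ((w + 1) * alpha + w * alpha) with (w * alpha + (w * alpha + alpha)) in E by ring.
  replace ((w - 1) * alpha + w * alpha) with (w * alpha + (w * alpha - alpha)) in E by ring.
  rewrite !sin_plus, sin_minus, !cos_plus, !cos_minus, S in E.
  pose proof w_gt_1; pose proof k_sin_alpha as KS; pose proof k_pos.
  assert (E2 : - x0 - x0 = - 2 * (k * sin alpha) / ((w + 1) * (w - 1))).
  { assert (Cc : cos (w * alpha) = 1 \/ cos (w * alpha) = -1) by nra.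
    destruct Cc as [Cc|Cc]; rewrite Cc in E; rewrite E; field; lra. }
  rewrite KS in E2; apply (Rmult_eq_reg_r (/ ((w + 1) * (w - 1)))); [| apply Rinv_neq_0_compat; nra].
  replace (x0 * (w * w - 1) * / ((w + 1) * (w - 1))) with x0 by (field; lra).
  replace (L * / ((w + 1) * (w - 1))) with (2 * L / ((w + 1) * (w - 1)) / 2) by (field; lra).
  lra.
Qed.

Lemma arc_of_sin a : - alpha <= a <= alpha -> arc k L (L + k * sin a) = a.
Proof.
  intros Ha; pose proof alpha_bounds; pose proof k_pos.
  unfold arc; replace ((L + k * sin a - L) / k) with (sin a) by (field; lra).
  apply asin_sin; lra.
Qed.

Lemma sin_param_in a : - alpha < a <= 0 -> 0 < L + k * sin a <= L.
Proof.
  intros Ha; pose proof alpha_bounds; pose proof k_pos; pose proof k_sin_alpha.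
  split.
  - pose proof (sin_increasing_1 (- alpha) a ltac:(lra) ltac:(lra) ltac:(lra) ltac:(lra) ltac:(lra)).
    rewrite sin_neg in *; nra.
  - pose proof (sin_ge_0 (- a) ltac:(lra) ltac:(lra)); rewrite sin_neg in *; nra.
Qed.

(* Otherwise the tangent angle reaches [2 PI] at the parameter of arc [a1] before [L],
   where [y] would be negative. *)
Lemma w_alpha_lt_2PI : w * alpha < 2 * PI.
Proof.
  destruct (Rlt_le_dec (w * alpha) (2 * PI)) as [|Hge]; auto; exfalso.
  pose proof w_gt_1; pose proof k_pos; pose proof alpha_bounds; pose proof PI_RGT_0.
  set (a1 := 2 * PI / w - alpha).
  assert (Ha1 : - alpha < a1 <= 0).
  { unfold a1; split; [assert (0 < 2 * PI / w) by (apply Rdiv_lt_0_compat; lra); lra |].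
    enough (2 * PI / w <= alpha) by lra.
    apply (Rmult_le_reg_r w); [lra |]; unfold Rdiv; rewrite Rmult_assoc, Rinv_l; lra. }
  set (s1 := L + k * sin a1).
  pose proof (sin_param_in a1 Ha1) as Hs1; fold s1 in Hs1.
  pose proof (y_explicit s1 ltac:(lra)) as E; rewrite y_0, prim_sin_arc_0 in E.
  unfold prim_sin_arc in E; unfold s1 in E; rewrite arc_of_sin in E by lra; fold s1 in E.
  replace ((w + 1) * a1 + w * alpha) with (2 * PI + a1) in E by (unfold a1; field; lra).
  replace ((w - 1) * a1 + w * alpha) with (2 * PI - a1) in E by (unfold a1; field; lra).
  rewrite cos_plus, cos_minus, cos_2PI, sin_2PI in E.
  assert (Hc : cos alpha < cos a1) by (rewrite <- (cos_neg a1); apply cos_decreasing_1; lra).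
  assert (HQ : 0 < k / 2 * (1 / (w + 1) + 1 / (w - 1)))
    by (apply Rmult_lt_0_compat; [lra | apply Rplus_lt_0_compat; apply Rdiv_lt_0_compat; lra]).
  assert (E2 : y s1 = (cos alpha - cos a1) * (k / 2 * (1 / (w + 1) + 1 / (w - 1))))
    by (replace (y s1) with (y s1 - 0) by ring; rewrite E; field; lra).
  pose proof (y_pos s1 ltac:(lra)); nra.
Qed.

Lemma w_alpha_eq_PI : w * alpha = PI.
Proof.
  pose proof w_pos; pose proof alpha_bounds; pose proof PI_RGT_0.
  destruct sin_cos_w_alpha as [S _]; pose proof w_alpha_lt_2PI.
  destruct (Rtotal_order (w * alpha) PI) as [Hl|[|Hg]]; auto; exfalso.
  - pose proof (sin_gt_0 (w * alpha) ltac:(nra) Hl); lra.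
  - pose proof (sin_gt_0 (w * alpha - PI) ltac:(lra) ltac:(lra)) as Hs.
    rewrite sin_minus, S, sin_PI in Hs; lra.
Qed.

Lemma sigma_eq_alpha : sigma_ x0 L = alpha.
Proof.
  pose proof w_pos; pose proof x0_w_sqr as W; pose proof w_alpha_eq_PI as B; unfold sigma_.
  assert (E : x0 / (L + x0) = / w * / w) by (rewrite <- W; field; split; [lra | intro; nra]).
  rewrite E, sqrt_square by (apply Rlt_le, Rinv_0_lt_compat; lra).
  apply (Rmult_eq_reg_r w); [| lra]; rewrite Rmult_assoc, Rinv_l by lra; lra.
Qed.

(* [alpha < PI / 2] and [w alpha = PI] give [w > 2], i.e. [L = x0 (w^2 - 1) > 3 x0]. *)
Lemma three_x0_lt_L : 3 * x0 < L.
Proof.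
  pose proof alpha_bounds; pose proof w_pos; pose proof PI_RGT_0; pose proof w_alpha_eq_PI.
  assert (2 < w).
  { destruct (Rle_lt_dec w 2); [| lra].
    assert (w * alpha <= 2 * alpha) by (apply Rmult_le_compat_r; lra); lra. }
  assert (4 < w * w) by nra.
  rewrite <- x0_w_sqr; nra.
Qed.

Lemma lam_eq : lam = 2 * L / (L + x0).
Proof.
  pose proof w_gt_1; pose proof w_sqr as E; pose proof x0_w_sqr as W; unfold q2 in *.
  assert (Hc : w * w * (- ((lam - 2) / 2)) = 1) by (rewrite E; field; lra).
  replace (2 * L / (L + x0)) with (2 * (w * w - 1) / (w * w)) by (rewrite <- W; field; split; nra).
  apply (Rmult_eq_reg_r (w * w)); [| nra].
  replace (2 * (w * w - 1) / (w * w) * (w * w)) with (2 * (w * w - 1)) by (field; nra); lra.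
Qed.

Lemma curve_eq_sol s : 0 <= s <= 2 * L -> x s = sol_x x0 L s /\ y s = sol_y x0 L s.
Proof.
  intros Hs; pose proof w_gt_1; pose proof x0_w_sqr as W; pose proof w_alpha_eq_PI as B.
  pose proof alpha_bounds; pose proof k_pos; pose proof k_sin_alpha as KS; pose proof PI_RGT_0.
  assert (Hsal : 0 < sin alpha) by (apply sin_gt_0; lra).
  assert (Hcal : 0 < cos alpha) by (apply cos_gt_0; lra).
  assert (Hk : k_ x0 L = k) by (unfold k_; rewrite sigma_eq_alpha, <- KS; field; lra).
  assert (Hw : PI / sigma_ x0 L = w) by (rewrite sigma_eq_alpha, <- B; field; lra).
  destruct (sol_eq_prim x0 L s ltac:(rewrite sigma_eq_alpha; lra)) as [SX SY].
  rewrite Hk, Hw, <- B in SX, SY; split.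
  - rewrite SX; pose proof (x_explicit s Hs) as E; rewrite prim_cos_arc_0, x_0 in E.
    enough (k / 2 * (- sin alpha / (w + 1) + sin alpha / (w - 1)) = x0) by lra.
    replace x0 with (k * sin alpha / (w * w - 1)) by (rewrite KS, <- W; field; nra).
    field; repeat split; nra.
  - rewrite SY, sigma_eq_alpha; pose proof (y_explicit s Hs) as E; rewrite prim_sin_arc_0, y_0 in E.
    enough (- (- (k / 2) * (cos alpha / (w + 1) + cos alpha / (w - 1)))
            = w * alpha * x0 / (alpha * tan alpha)) by lra.
    unfold tan; replace x0 with (k * sin alpha / (w * w - 1)) by (rewrite KS, <- W; field; nra).
    field; repeat split; try lra; nra.
Qed.

End NegativeLeadingCoefficient.

Lemma solution_is_explicit : 3 * x0 < L /\ lam = 2 * L / (L + x0) /\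
  forall s, 0 <= s <= 2 * L -> x s = sol_x x0 L s /\ y s = sol_y x0 L s.
Proof.
  destruct (Rtotal_order q2 0) as [Hn | [H0 | Hp]].
  - split; [| split]; [apply three_x0_lt_L | apply lam_eq | apply curve_eq_sol]; exact Hn.
  - exfalso; apply q2_ne_0, H0.
  - exfalso; apply q2_not_pos, Hp.
Qed.

End Solution.

Lemma is_solution_explicit x0 L lam x y : 0 < x0 -> 0 < L -> is_solution x0 L lam x y ->
  3 * x0 < L /\ lam = 2 * L / (L + x0) /\
  forall s, 0 <= s <= 2 * L -> x s = sol_x x0 L s /\ y s = sol_y x0 L s.
Proof.
  intros Hx0 HL [Hlam [[[ex [Hex Hxs]] [[ey [Hey Hys]] [_ [Hcurv [Hinj [Hx0' [Hy0 [Hx2 [Hy2 Hypos]]]]]]]]]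
    [Hsym [Harc [Hdy0 [Hdy2 Hode]]]]]].
  assert (He : 0 < Rmin ex ey) by (unfold Rmin; destruct Rle_dec; lra).
  apply (solution_is_explicit x0 L lam (Rmin ex ey) x y); auto; intros n t Ht;
    [apply Hxs | apply Hys]; unfold Rmin in Ht; destruct Rle_dec; lra.
Qed.

(** * The explicit solution *)

Section ExplicitSolution.
Variables x0 L : R.
Hypothesis x0_pos : 0 < x0.
Hypothesis L_pos : 0 < L.
Hypothesis three_x0_lt_L : 3 * x0 < L.

Let sg := sigma_ x0 L.
Let k := k_ x0 L.
Let w := PI / sg.

Lemma sigma_bounds : 0 < sg < PI / 2.
Proof.
  unfold sg, sigma_; pose proof PI_RGT_0.
  assert (H1 : 0 < x0 / (L + x0)) by (apply Rdiv_lt_0_compat; lra).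
  assert (H2 : x0 / (L + x0) < / 4)
    by (apply (Rmult_lt_reg_r (L + x0)); [lra |]; field_simplify; lra).
  assert (H3 : 0 < sqrt (x0 / (L + x0))) by (apply sqrt_lt_R0; auto).
  assert (H4 : sqrt (x0 / (L + x0)) < / 2).
  { replace (/ 2) with (sqrt (/ 4)); [apply sqrt_lt_1_alt; lra |].
    replace (/ 4) with (/ 2 * / 2) by field; apply sqrt_square; lra. }
  split; nra.
Qed.

Lemma sin_sigma_bounds : 0 < sin sg < 1.
Proof.
  pose proof sigma_bounds; pose proof PI_RGT_0; split.
  - apply sin_gt_0; lra.
  - rewrite <- sin_PI2; apply sin_increasing_1; lra.
Qed.

Lemma L_lt_k_sigma : L < k.
Proof.
  unfold k, k_; fold sg; pose proof sin_sigma_bounds.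
  apply (Rmult_lt_reg_r (sin sg)); [lra |]; field_simplify; nra.
Qed.

Lemma k_sigma_neq_0 : k <> 0.
Proof. pose proof L_lt_k_sigma; lra. Qed.

Lemma k_sin_sigma : k * sin sg = L.
Proof. unfold k, k_; fold sg; pose proof sin_sigma_bounds; field; lra. Qed.

Lemma w_gt_2 : 2 < w.
Proof.
  pose proof sigma_bounds; pose proof PI_RGT_0; unfold w.
  apply (Rmult_lt_reg_r sg); [lra |]; field_simplify; lra.
Qed.

Lemma w_mul_sigma : w * sg = PI.
Proof. pose proof sigma_bounds; unfold w; field; lra. Qed.

Lemma x0_sigma_relation : x0 * (w * w - 1) = L.
Proof.
  pose proof sigma_bounds; pose proof PI_RGT_0; unfold w.
  assert (E : sg * sg = PI * PI * (x0 / (L + x0))).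
  { unfold sg, sigma_.
    assert (0 <= x0 / (L + x0)) by (apply Rlt_le, Rdiv_lt_0_compat; lra).
    transitivity (PI * PI * (sqrt (x0 / (L + x0)) * sqrt (x0 / (L + x0)))); [ring |].
    rewrite sqrt_sqrt; auto. }
  replace (PI / sg * (PI / sg)) with (PI * PI / (sg * sg)) by (field; lra).
  rewrite E; field; repeat split; lra.
Qed.

Definition in_domain t := L - k < t < L + k.

Lemma open_in_domain : open in_domain.
Proof. apply open_and; [apply open_gt | apply open_lt]. Qed.

Lemma in_domain_ball t : in_domain t -> -1 < (t - L) / k < 1.
Proof.
  intros H; unfold in_domain in H; pose proof L_lt_k_sigma.
  split; apply (Rmult_lt_reg_r k); try lra; field_simplify; lra.
Qed.

Lemma in_domain_of_interval t : 0 <= t <= 2 * L -> in_domain t.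
Proof. intros; unfold in_domain; pose proof L_lt_k_sigma; lra. Qed.

Lemma sol_eq_prim_sigma s : sol_x x0 L s = prim_cos_arc k w PI L s /\
  sol_y x0 L s = prim_sin_arc k w PI L s + PI * x0 / (sg * tan sg).
Proof. apply sol_eq_prim; pose proof sigma_bounds; pose proof PI_RGT_0; fold sg; lra. Qed.

Lemma Cn_on_arc n : Cn_on in_domain n (arc k L).
Proof.
  apply (Cn_on_comp in_domain unit_ball n asin (fun t => (t - L) / k)).
  - apply open_in_domain.
  - apply open_unit_ball.
  - apply in_domain_ball.
  - apply Cn_on_asin.
  - apply (Cn_on_ext in_domain n (fun t => / k * (t - L))); [intros; unfold Rdiv; ring |].
    apply Cn_on_scal, Cn_on_minus; auto using open_in_domain, Cn_on_id, Cn_on_const.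
Qed.

Lemma Cn_on_comp_arc n c b (g : R -> R) : Cn_on (fun _ => True) n g ->
  Cn_on in_domain n (fun t => g (c * arc k L t + b)).
Proof.
  intros Hg; apply (Cn_on_comp in_domain (fun _ => True) n g (fun t => c * arc k L t + b));
    auto using open_in_domain, open_true.
  apply Cn_on_plus; [apply open_in_domain | | apply Cn_on_const, open_in_domain].
  apply Cn_on_scal; [apply open_in_domain | apply Cn_on_arc].
Qed.

Lemma Cn_on_sol_x n : Cn_on in_domain n (sol_x x0 L).
Proof.
  apply (Cn_on_ext in_domain n (fun t => k / 2 / (w + 1) * sin ((w + 1) * arc k L t + PI)
                            + k / 2 / (w - 1) * sin ((w - 1) * arc k L t + PI))).
  { intros t; rewrite (proj1 (sol_eq_prim_sigma t)); unfold prim_cos_arc.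
    pose proof w_gt_2; field; lra. }
  apply Cn_on_plus; [apply open_in_domain | |]; apply Cn_on_scal; try apply open_in_domain;
    apply Cn_on_comp_arc, Cn_on_sin_cos.
Qed.

Lemma Cn_on_sol_y n : Cn_on in_domain n (sol_y x0 L).
Proof.
  apply (Cn_on_ext in_domain n (fun t => - (k / 2) / (w + 1) * cos ((w + 1) * arc k L t + PI)
                            + - (k / 2) / (w - 1) * cos ((w - 1) * arc k L t + PI)
                            + PI * x0 / (sg * tan sg))).
  { intros t; rewrite (proj2 (sol_eq_prim_sigma t)); unfold prim_sin_arc.
    set (T := PI * x0 / (sg * tan sg)); pose proof w_gt_2; field; lra. }
  apply Cn_on_plus; [apply open_in_domain | | apply Cn_on_const, open_in_domain].
  apply Cn_on_plus; [apply open_in_domain | |]; apply Cn_on_scal; try apply open_in_domain;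
    apply Cn_on_comp_arc, Cn_on_sin_cos.
Qed.

Let angle t := w * arc k L t + PI.
Let dangle t := w * (/ k * / sqrt (1 - (t - L) / k * ((t - L) / k))).

Lemma dangle_pos t : in_domain t -> 0 < dangle t.
Proof.
  intros H; pose proof (sqrt_1_minus_sqr_pos _ (in_domain_ball t H)).
  pose proof w_gt_2; pose proof L_lt_k_sigma; unfold dangle.
  apply Rmult_lt_0_compat, Rmult_lt_0_compat; try lra; apply Rinv_0_lt_compat; lra.
Qed.

Lemma is_derive_angle t : in_domain t -> is_derive angle t (dangle t).
Proof.
  intros H; apply is_derive_angle_arc; [pose proof L_lt_k_sigma; lra | apply in_domain_ball, H].
Qed.

Lemma is_derive_sol_x t : in_domain t -> is_derive (sol_x x0 L) t (cos (angle t)).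
Proof.
  intros H; apply (is_derive_eq (prim_cos_arc k w PI L) _ t (cos (angle t)));
    [intros u; symmetry; apply (proj1 (sol_eq_prim_sigma u)) | reflexivity |].
  apply is_derive_prim_cos_arc; [pose proof L_lt_k_sigma; lra | pose proof w_gt_2; lra |].
  apply in_domain_ball, H.
Qed.

Lemma is_derive_sol_y t : in_domain t -> is_derive (sol_y x0 L) t (sin (angle t)).
Proof.
  intros H; apply (is_derive_eq (fun u => prim_sin_arc k w PI L u + PI * x0 / (sg * tan sg))
                     _ t (sin (angle t) + 0));
    [intros u; symmetry; apply (proj2 (sol_eq_prim_sigma u)) | ring |].
  apply is_derive_Rplus; [| apply is_derive_Rconst].
  apply is_derive_prim_sin_arc; [pose proof L_lt_k_sigma; lra | pose proof w_gt_2; lra |].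
  apply in_domain_ball, H.
Qed.

Lemma Derive_sol_x t : in_domain t -> Derive (sol_x x0 L) t = cos (angle t).
Proof. intros; apply is_derive_unique, is_derive_sol_x; auto. Qed.

Lemma Derive_sol_y t : in_domain t -> Derive (sol_y x0 L) t = sin (angle t).
Proof. intros; apply is_derive_unique, is_derive_sol_y; auto. Qed.

Lemma Derive2_sol_x t : in_domain t -> Derive (Derive (sol_x x0 L)) t = - sin (angle t) * dangle t.
Proof.
  intros H; rewrite (Derive_ext_loc _ (fun u => cos (angle u))).
  - apply is_derive_unique, (is_derive_Rcomp cos angle t);
      [apply is_derive_angle, H | apply is_derive_lim, derivable_pt_lim_cos].
  - apply (filter_imp in_domain); [intros; apply Derive_sol_x; auto | apply open_in_domain, H].
Qed.

Lemma Derive2_sol_y t : in_domain t -> Derive (Derive (sol_y x0 L)) t = cos (angle t) * dangle t.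
Proof.
  intros H; rewrite (Derive_ext_loc _ (fun u => sin (angle u))).
  - apply is_derive_unique, (is_derive_Rcomp sin angle t);
      [apply is_derive_angle, H | apply is_derive_lim, derivable_pt_lim_sin].
  - apply (filter_imp in_domain); [intros; apply Derive_sol_y; auto | apply open_in_domain, H].
Qed.

Lemma curvature_sol t : in_domain t -> curvature (sol_x x0 L) (sol_y x0 L) t = dangle t.
Proof.
  intros H; unfold curvature.
  rewrite Derive_sol_x, Derive_sol_y, Derive2_sol_x, Derive2_sol_y by auto.
  pose proof (sin2_cos2_mult (angle t)) as E.
  replace (cos (angle t) ^ 2 + sin (angle t) ^ 2) with 1 by (simpl; lra).
  rewrite sqrt_1; simpl.
  transitivity (dangle t * (sin (angle t) * sin (angle t) + cos (angle t) * cos (angle t)));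
    [field | rewrite E; ring].
Qed.

Lemma inv_curvature2_sol t : in_domain t ->
  / (curvature (sol_x x0 L) (sol_y x0 L) t) ^ 2 = (k * k - (t - L) ^ 2) / (w * w).
Proof.
  intros H; rewrite curvature_sol by auto; unfold dangle.
  pose proof (in_domain_ball t H) as Hz; pose proof (sqrt_1_minus_sqr_pos _ Hz) as Hq.
  assert (Hq2 : sqrt (1 - (t - L) / k * ((t - L) / k)) * sqrt (1 - (t - L) / k * ((t - L) / k))
                = 1 - (t - L) / k * ((t - L) / k)) by (apply sqrt_sqrt; nra).
  set (q := sqrt (1 - (t - L) / k * ((t - L) / k))) in *.
  pose proof w_gt_2; pose proof L_lt_k_sigma.
  replace ((w * (/ k * / q)) ^ 2) with ((w * w) / (k * k * (q * q))) by (field; lra).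
  rewrite Hq2; field; unfold in_domain in H; repeat split; try lra; nra.
Qed.

Lemma equation_sol s : in_domain s ->
  Derive_n (fun t => / (curvature (sol_x x0 L) (sol_y x0 L) t) ^ 2) 2 s = - 2 / (w * w).
Proof.
  intros H; pose proof w_gt_2.
  rewrite (Derive_n_ext_loc _ (fun t => (k * k - (t - L) ^ 2) / (w * w))).
  - simpl; rewrite (Derive_ext (Derive (fun t => (k * k - (t - L) ^ 2) / (w * w)))
                      (fun t => - 2 * (t - L) / (w * w))).
    + apply is_derive_unique; auto_derive; [exact I | field; lra].
    + intros t; apply is_derive_unique; auto_derive; [exact I | field; lra].
  - apply (filter_imp in_domain); [intros; apply inv_curvature2_sol; auto | apply open_in_domain, H].
Qed.

Lemma arc_sigma_0 : arc k L 0 = - sg.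
Proof.
  unfold arc; replace ((0 - L) / k) with (- sin sg).
  - rewrite asin_opp, asin_sin; auto; pose proof sigma_bounds; lra.
  - rewrite <- k_sin_sigma; field; apply k_sigma_neq_0.
Qed.

Lemma arc_sigma_L : arc k L L = 0.
Proof. unfold arc; replace ((L - L) / k) with 0 by (field; apply k_sigma_neq_0); apply asin_0. Qed.

Lemma arc_sigma_2L : arc k L (2 * L) = sg.
Proof.
  unfold arc; replace ((2 * L - L) / k) with (- ((0 - L) / k)) by (field; apply k_sigma_neq_0).
  rewrite asin_opp; fold (arc k L 0); rewrite arc_sigma_0; ring.
Qed.

Lemma sol_symmetric s :
  sol_x x0 L (2 * L - s) = - sol_x x0 L s /\ sol_y x0 L (2 * L - s) = sol_y x0 L s.
Proof.
  unfold sol_x, sol_y, a_; cbv zeta; fold k.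
  replace ((2 * L - s - L) / k) with (- ((s - L) / k)) by (field; apply k_sigma_neq_0).
  rewrite asin_opp; set (a := asin ((s - L) / k)).
  set (c1 := (PI + sigma_ x0 L) / sigma_ x0 L); set (c2 := (PI - sigma_ x0 L) / sigma_ x0 L).
  replace (c1 * - a) with (- (c1 * a)) by ring; replace (c2 * - a) with (- (c2 * a)) by ring.
  rewrite !sin_neg, !cos_neg; split; ring.
Qed.

Lemma sol_x_0 : sol_x x0 L 0 = x0.
Proof.
  rewrite (proj1 (sol_eq_prim_sigma 0)); unfold prim_cos_arc; rewrite arc_sigma_0.
  pose proof w_mul_sigma; pose proof w_gt_2; pose proof k_sin_sigma as KS.
  replace ((w + 1) * - sg + PI) with (- sg) by lra.
  replace ((w - 1) * - sg + PI) with sg by lra.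
  rewrite sin_neg.
  replace x0 with (k * sin sg / ((w + 1) * (w - 1)))
    by (rewrite KS, <- x0_sigma_relation; field; lra).
  field; lra.
Qed.

Lemma sol_y_0 : sol_y x0 L 0 = 0.
Proof.
  rewrite (proj2 (sol_eq_prim_sigma 0)); unfold prim_sin_arc; rewrite arc_sigma_0.
  pose proof w_mul_sigma; pose proof w_gt_2; pose proof k_sin_sigma as KS.
  pose proof sin_sigma_bounds; pose proof sigma_bounds.
  replace ((w + 1) * - sg + PI) with (- sg) by lra.
  replace ((w - 1) * - sg + PI) with sg by lra.
  assert (Hc : 0 < cos sg) by (apply cos_gt_0; lra).
  rewrite cos_neg; unfold tan; replace PI with (w * sg) by lra.
  replace x0 with (k * sin sg / (w * w - 1)) by (rewrite KS, <- x0_sigma_relation; field; nra).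
  field; repeat split; try lra; nra.
Qed.

Lemma sol_x_L : sol_x x0 L L = 0.
Proof.
  rewrite (proj1 (sol_eq_prim_sigma L)); unfold prim_cos_arc; rewrite arc_sigma_L.
  rewrite !Rmult_0_r, !Rplus_0_l, sin_PI; unfold Rdiv; ring.
Qed.

Lemma sol_x_2L : sol_x x0 L (2 * L) = - x0.
Proof. replace (2 * L) with (2 * L - 0) by ring; rewrite (proj1 (sol_symmetric 0)), sol_x_0; auto. Qed.

Lemma sol_y_2L : sol_y x0 L (2 * L) = 0.
Proof. replace (2 * L) with (2 * L - 0) by ring; rewrite (proj2 (sol_symmetric 0)), sol_y_0; auto. Qed.

Lemma Derive_sol_y_0 : Derive (sol_y x0 L) 0 = 0.
Proof.
  rewrite Derive_sol_y by (apply in_domain_of_interval; lra); unfold angle; rewrite arc_sigma_0.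
  pose proof w_mul_sigma; replace (w * - sg + PI) with 0 by lra; apply sin_0.
Qed.

Lemma Derive_sol_y_2L : Derive (sol_y x0 L) (2 * L) = 0.
Proof.
  rewrite Derive_sol_y by (apply in_domain_of_interval; lra); unfold angle; rewrite arc_sigma_2L.
  pose proof w_mul_sigma; replace (w * sg + PI) with (2 * PI) by lra; apply sin_2PI.
Qed.

Lemma arc_sigma_strict_incr s t : 0 <= s -> s < t -> t <= 2 * L -> arc k L s < arc k L t.
Proof.
  intros Hs Hst Ht; pose proof L_lt_k_sigma.
  assert (D : forall u, 0 <= u <= 2 * L ->
    is_derive (arc k L) u (/ k * / sqrt (1 - (u - L) / k * ((u - L) / k))))
    by (intros u Hu; apply is_derive_arc; [lra | apply in_domain_ball, in_domain_of_interval, Hu]).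
  apply (strict_incr_of_derive_pos (arc k L)
    (fun u => / k * / sqrt (1 - (u - L) / k * ((u - L) / k))) 0 (2 * L)); auto.
  - intros u Hu; apply D; lra.
  - intros u Hu; pose proof (sqrt_1_minus_sqr_pos _ (in_domain_ball u (in_domain_of_interval u ltac:(lra)))).
    apply Rmult_lt_0_compat; apply Rinv_0_lt_compat; lra.
  - intros u Hu; apply (is_derive_continuity_pt _ _ _ (D u Hu)).
Qed.

Lemma continuity_sol_x t : 0 <= t <= 2 * L -> continuity_pt (sol_x x0 L) t.
Proof.
  intros Ht; apply (is_derive_continuity_pt _ _ _ (is_derive_sol_x t (in_domain_of_interval t Ht))).
Qed.

Lemma continuity_sol_y t : 0 <= t <= 2 * L -> continuity_pt (sol_y x0 L) t.
Proof.
  intros Ht; apply (is_derive_continuity_pt _ _ _ (is_derive_sol_y t (in_domain_of_interval t Ht))).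
Qed.

Lemma sol_y_strict_incr s t : 0 <= s -> s < t -> t <= L -> sol_y x0 L s < sol_y x0 L t.
Proof.
  intros; apply (strict_incr_of_derive_pos (sol_y x0 L) (fun u => sin (angle u)) 0 L); auto.
  - intros u Hu; apply is_derive_sol_y, in_domain_of_interval; lra.
  - intros u Hu; unfold angle; pose proof w_mul_sigma; pose proof w_gt_2.
    pose proof (arc_sigma_strict_incr 0 u ltac:(lra) ltac:(lra) ltac:(lra)).
    pose proof (arc_sigma_strict_incr u L ltac:(lra) ltac:(lra) ltac:(lra)).
    rewrite arc_sigma_0 in *; rewrite arc_sigma_L in *; apply sin_gt_0; nra.
  - intros u Hu; apply continuity_sol_y; lra.
Qed.

Lemma sol_y_pos s : 0 < s < 2 * L -> 0 < sol_y x0 L s.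
Proof.
  intros Hs; rewrite <- sol_y_0; destruct (Rle_dec s L).
  - apply sol_y_strict_incr; lra.
  - rewrite <- (proj2 (sol_symmetric s)); apply sol_y_strict_incr; lra.
Qed.

Lemma sol_y_inj_half s t : 0 <= s <= L -> 0 <= t <= L -> sol_y x0 L s = sol_y x0 L t -> s = t.
Proof.
  intros Hs Ht E; destruct (Rtotal_order s t) as [H|[H|H]]; auto; exfalso.
  - pose proof (sol_y_strict_incr s t ltac:(lra) H ltac:(lra)); lra.
  - pose proof (sol_y_strict_incr t s ltac:(lra) H ltac:(lra)); lra.
Qed.

(* On [[0, L]] the tangent angle [angle] runs through [[0, PI]]: [x] increases from [x 0 = x0]
   while [angle < PI / 2] and then decreases to [x L = 0]. *)
Lemma sol_x_pos_late s : 0 <= s < L -> - (PI / 2) <= w * arc k L s -> 0 < sol_x x0 L s.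
Proof.
  intros Hs Hge; pose proof w_gt_2; pose proof PI_RGT_0.
  enough (- sol_x x0 L s < - sol_x x0 L L) by (rewrite sol_x_L in *; lra).
  apply (strict_incr_of_derive_pos (fun u => - sol_x x0 L u) (fun u => - cos (angle u)) s L); try lra.
  - intros u Hu; apply (is_derive_eq (fun u => -1 * sol_x x0 L u) _ u
                          (0 * sol_x x0 L u + -1 * cos (angle u))); [intros; ring | ring |].
    apply is_derive_Rmult; [apply is_derive_Rconst | apply is_derive_sol_x, in_domain_of_interval; lra].
  - intros u Hu; unfold angle; rewrite neg_cos, Ropp_involutive.
    pose proof (arc_sigma_strict_incr s u ltac:(lra) ltac:(lra) ltac:(lra)).
    pose proof (arc_sigma_strict_incr u L ltac:(lra) ltac:(lra) ltac:(lra)).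
    rewrite arc_sigma_L in *; apply cos_gt_0; nra.
  - intros u Hu; apply (continuity_pt_opp (sol_x x0 L)), continuity_sol_x; lra.
Qed.

Lemma sol_x_pos_early s : 0 < s < L -> w * arc k L s < - (PI / 2) -> 0 < sol_x x0 L s.
Proof.
  intros Hs Hlt; pose proof w_mul_sigma; pose proof w_gt_2; pose proof PI_RGT_0.
  enough (sol_x x0 L 0 < sol_x x0 L s) by (rewrite sol_x_0 in *; lra).
  apply (strict_incr_of_derive_pos (sol_x x0 L) (fun u => cos (angle u)) 0 s); try lra.
  - intros u Hu; apply is_derive_sol_x, in_domain_of_interval; lra.
  - intros u Hu; unfold angle; rewrite neg_cos.
    pose proof (arc_sigma_strict_incr 0 u ltac:(lra) ltac:(lra) ltac:(lra)).
    pose proof (arc_sigma_strict_incr u s ltac:(lra) ltac:(lra) ltac:(lra)).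
    rewrite arc_sigma_0 in *.
    assert (0 < cos (w * arc k L u + PI)) as Hc by (apply cos_gt_0; nra).
    rewrite neg_cos in Hc; lra.
  - intros u Hu; apply continuity_sol_x; lra.
Qed.

Lemma sol_x_pos s : 0 <= s < L -> 0 < sol_x x0 L s.
Proof.
  intros Hs; destruct (Rle_lt_dec (- (PI / 2)) (w * arc k L s)) as [Hge | Hlt].
  - apply sol_x_pos_late; auto.
  - destruct (Req_dec s 0) as [-> | Hs0]; [rewrite sol_x_0; lra |].
    apply sol_x_pos_early; auto; lra.
Qed.

Lemma sol_inj s t : 0 <= s <= 2 * L -> 0 <= t <= 2 * L ->
  sol_x x0 L s = sol_x x0 L t -> sol_y x0 L s = sol_y x0 L t -> s = t.
Proof.
  assert (Cross : forall a b, 0 <= a <= L -> L < b <= 2 * L ->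
            sol_x x0 L a = sol_x x0 L b -> sol_y x0 L a = sol_y x0 L b -> False).
  { intros a b Ha Hb Ex Ey; destruct (sol_symmetric b) as [Sx Sy].
    assert (E : a = 2 * L - b) by (apply sol_y_inj_half; lra).
    rewrite <- E in Sx; rewrite Sx in Ex.
    destruct (Req_dec a L) as [->|Hne]; [lra |].
    pose proof (sol_x_pos a ltac:(lra)); lra. }
  intros Hs Ht Ex Ey; destruct (Rle_dec s L), (Rle_dec t L).
  - apply sol_y_inj_half; auto; lra.
  - exfalso; apply (Cross s t); auto; lra.
  - exfalso; apply (Cross t s); auto; lra.
  - destruct (sol_symmetric s) as [_ Sy1]; destruct (sol_symmetric t) as [_ Sy2].
    enough (2 * L - s = 2 * L - t) by lra.
    apply sol_y_inj_half; lra.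
Qed.

Lemma sol_admissible : admissible x0 L (sol_x x0 L) (sol_y x0 L).
Proof.
  assert (Hsm : forall f, (forall n, Cn_on in_domain n f) -> smooth_near 0 (2 * L) f).
  { intros f Hf; pose proof L_lt_k_sigma; exists (k - L); split; [lra |].
    intros n t Ht; apply (Hf n n t); auto; unfold in_domain; lra. }
  split; [apply Hsm, Cn_on_sol_x |]; split; [apply Hsm, Cn_on_sol_y |].
  split; [| split; [| split; [| split; [| split; [| split; [| split]]]]]];
    auto using sol_inj, sol_x_0, sol_y_0, sol_x_2L, sol_y_2L, sol_y_pos.
  - intros s Hs E; rewrite Derive_sol_x, Derive_sol_y in E by (apply in_domain_of_interval; auto).
    injection E; intros E1 E2; pose proof (sin2_cos2_mult (angle s)); rewrite E1, E2 in *; lra.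
  - intros s Hs; rewrite curvature_sol by (apply in_domain_of_interval; auto).
    apply dangle_pos, in_domain_of_interval; auto.
Qed.

Lemma sol_is_solution : is_solution x0 L (2 * L / (L + x0)) (sol_x x0 L) (sol_y x0 L).
Proof.
  pose proof w_gt_2; pose proof x0_sigma_relation.
  split; [apply Rdiv_lt_0_compat; lra |]; split; [apply sol_admissible |].
  split; [| split; [| split; [| split]]]; auto using Derive_sol_y_0, Derive_sol_y_2L.
  - intros s Hs; exists (2 * L - s); split; [lra | apply sol_symmetric].
  - intros s Hs; rewrite Derive_sol_x, Derive_sol_y by (apply in_domain_of_interval; auto).
    pose proof (sin2_cos2_mult (angle s)); simpl; lra.
  - intros s Hs; rewrite equation_sol by (apply in_domain_of_interval; auto).
    replace (2 * L / (L + x0)) with (2 - 2 * x0 / (L + x0)) by (field; lra).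
    replace (L + x0) with (x0 * (w * w)) by lra; field; split; nra.
Qed.

End ExplicitSolution.

Theorem mainTheorem6 (x0 L : R) (hx0 : 0 < x0) (hL : 0 < L) :
  ((exists (lam : R) (x y : R -> R),
      is_solution x0 L lam x y /\
      forall (lam' : R) (x' y' : R -> R), is_solution x0 L lam' x' y' ->
        lam' = lam /\
        forall s, 0 <= s <= 2 * L -> x' s = x s /\ y' s = y s)
   <-> 3 * x0 < L) /\
  (3 * x0 < L ->
     forall (lam : R) (x y : R -> R), is_solution x0 L lam x y ->
       lam = 2 * L / (L + x0) /\
       forall s, 0 <= s <= 2 * L -> x s = sol_x x0 L s /\ y s = sol_y x0 L s).
Proof.
  split; [split |].
  - intros [lam [x [y [Hsol _]]]]; exact (proj1 (is_solution_explicit x0 L lam x y hx0 hL Hsol)).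
  - intros H3; exists (2 * L / (L + x0)), (sol_x x0 L), (sol_y x0 L).
    split; [apply sol_is_solution; auto |].
    intros lam' x' y' Hsol; apply (is_solution_explicit x0 L lam' x' y' hx0 hL Hsol).
  - intros _ lam x y Hsol; apply (is_solution_explicit x0 L lam x y hx0 hL Hsol).
Qed.
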